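(* Every latent information prior (i.e. every Borel probability measure $\pi$ on $[0,1]$ maximizing $I(\pi)$ over all Borel probability measures on $[0,1]$) is a discrete distribution whose support consists of at most four points.
   Context: Bernoulli model: for $\theta\in[0,1]$, $p_\theta(x)=\theta^x(1-\theta)^{1-x}$, $x\in\{0,1\}$. One observes $x\sim p_\theta$ and predicts an independent future $y\sim p_\theta$. A nonrandomized decision is a pair $\delta=(\delta_0,\delta_1)\in\mathcal D=[0,1]^2$, used as the predictive distribution $p_\delta(y\mid x)=\delta_x^{\,y}(1-\delta_x)^{1-y}$. The Kullback–Leibler risk is $R_\delta(\theta)=-S(\theta)+\theta^2\log\frac1{\delta_1}+\theta(1-\theta)\log\frac1{1-\delta_1}+\theta(1-\theta)\log\frac1{\delta_0}+(1-\theta)^2\log\frac1{1-\delta_0}\in[0,+\infty]$, where $S(\theta)=-\theta\log\theta-(1-\theta)\log(1-\theta)$ is the binary entropy, with conventions $0\log 0=0$, $\log(1/0)=+\infty$, $0\cdot(+\infty)=0$. A prior is a Borel probability measure $\pi$ on $[0,1]$. The conditional mutual information of $\theta$ and $y$ given $x$ under $\pi$ is $I(\pi)=\min_{\delta\in\mathcal D}\int_{[0,1]}R_\delta(\theta)\,\pi(d\theta)$, i.e. the Bayes risk of the Bayesian predictive distribution $p_\pi(y\mid x)=\int p_\theta(y)p_\theta(x)\pi(d\theta)/\int p_\theta(x)\pi(d\theta)$. A latent information prior is a prior maximizing $I$ over all priors. *)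

From Stdlib Require Import Reals Lra ClassicalEpsilon.
Open Scope R_scope.

Inductive ereal : Type := Fin (r : R) | PInf.

Definition ele (x y : ereal) : Prop :=
  match x, y with
  | Fin a, Fin b => a <= b
  | _, PInf => True
  | PInf, Fin _ => False
  end.

Definition eadd (x y : ereal) : ereal :=
  match x, y with
  | Fin a, Fin b => Fin (a + b)
  | _, _ => PInf
  end.

Definition is_esup (P : ereal -> Prop) (v : ereal) : Prop :=
  (forall x, P x -> ele x v) /\ (forall u, (forall x, P x -> ele x u) -> ele v u).
Definition is_einf (P : ereal -> Prop) (v : ereal) : Prop :=
  (forall x, P x -> ele v x) /\ (forall u, (forall x, P x -> ele u x) -> ele u v).

Definition esup (P : ereal -> Prop) : ereal :=
  epsilon (inhabits PInf) (is_esup P).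
Definition einf (P : ereal -> Prop) : ereal :=
  epsilon (inhabits PInf) (is_einf P).

Definition is_sigma_algebra (F : (R -> Prop) -> Prop) : Prop :=
  F (fun _ => True) /\
  (forall A, F A -> F (fun x => ~ A x)) /\
  (forall A : nat -> (R -> Prop), (forall n, F (A n)) -> F (fun x => exists n, A n x)).

Definition borel (A : R -> Prop) : Prop :=
  forall F, is_sigma_algebra F -> (forall a b, F (fun x => a < x < b)) -> F A.

Definition unit_interval (x : R) : Prop := 0 <= x <= 1.

(** * Borel probability measures on [0,1]
    (represented as Borel probability measures on R giving full mass to [0,1]) *)
Definition prior (mu : (R -> Prop) -> R) : Prop :=
  (forall A, borel A -> 0 <= mu A) /\
  mu (fun _ => True) = 1 /\
  mu unit_interval = 1 /\
  (forall A : nat -> (R -> Prop),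
      (forall n, borel (A n)) ->
      (forall m n x, m <> n -> A m x -> A n x -> False) ->
      infinite_sum (fun n => mu (A n)) (mu (fun x => exists n, A n x))).

(** * Integral over [0,1] of a nonnegative extended-valued function:
    supremum of  sum_i mu(A_i) c_i  over finite families of pairwise disjoint
    Borel sets A_i in [0,1] and constants 0 <= c_i <= f on A_i
    (i.e. over nonnegative simple functions below f). *)
Fixpoint rsum (f : nat -> R) (n : nat) : R :=
  match n with O => 0 | S k => rsum f k + f k end.

Definition lower_sum (mu : (R -> Prop) -> R) (f : R -> ereal) (v : R) : Prop :=
  exists (n : nat) (A : nat -> (R -> Prop)) (c : nat -> R),
    (forall i, (i < n)%nat -> borel (A i)) /\
    (forall i x, (i < n)%nat -> A i x -> unit_interval x) /\
    (forall i j x, (i < n)%nat -> (j < n)%nat -> i <> j -> A i x -> A j x -> False) /\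
    (forall i, (i < n)%nat -> 0 <= c i) /\
    (forall i x, (i < n)%nat -> A i x -> ele (Fin (c i)) (f x)) /\
    v = rsum (fun i => mu (A i) * c i) n.

Definition integral (mu : (R -> Prop) -> R) (f : R -> ereal) : ereal :=
  esup (fun e => exists v, lower_sum mu f v /\ e = Fin v).

(** * Kullback-Leibler risk of the decision delta = (d0, d1) *)
Definition xlogx (x : R) : R := if Req_EM_T x 0 then 0 else x * ln x.

Definition S (t : R) : R := - xlogx t - xlogx (1 - t).

Definition clog (c d : R) : ereal :=
  if Req_EM_T c 0 then Fin 0
  else if Req_EM_T d 0 then PInf
  else Fin (c * ln (1 / d)).

Definition risk (d0 d1 : R) (t : R) : ereal :=
  eadd (Fin (- S t))
   (eadd (clog (t ^ 2) d1)
    (eadd (clog (t * (1 - t)) (1 - d1))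
     (eadd (clog (t * (1 - t)) d0)
           (clog ((1 - t) ^ 2) (1 - d0))))).

(** * Conditional mutual information I(pi): minimum Bayes risk over D = [0,1]^2 *)
Definition I (mu : (R -> Prop) -> R) : ereal :=
  einf (fun e => exists d0 d1, unit_interval d0 /\ unit_interval d1 /\
                               e = integral mu (risk d0 d1)).

Definition latent_information_prior (mu : (R -> Prop) -> R) : Prop :=
  prior mu /\ forall nu, prior nu -> ele (I nu) (I mu).

(* Let p and q be the first two moments of the parameter under a prior and s the mean of the
   binary entropy S.  Gibbs' inequality bounds the Bayes risk of every decision from below by
   H(p,q) - s, where H(p,q) is the conditional entropy of y given x for the joint law with cell
   probabilities q, p-q, p-q, 1-2p+q; when these are positive the decision
   (d0,d1) = ((p-q)/(1-p), q/p) attains the bound, so I = H(p,q) - s.  Mixing a maximizer with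
   a small point mass at t and letting its weight tend to 0 shows that the risk R(t) of this
   Bayes decision never exceeds I; as R integrates to I, the nonnegative function I - R vanishes
   almost surely.  Its second derivative on (0,1) is a constant minus 1/(t(1-t)), so by Rolle it
   has at most two zeros there, and the prior is carried by these zeros together with 0 and 1.
   If a cell probability vanishes the prior is carried by {0}, {0,1} or {1} outright.
   The integral of a uniformly continuous function against a prior is the limit of its
   Riemann-Stieltjes sums over uniform grids, which is how all expectations are handled. *)
From Stdlib Require Import ZArith Reals Lra Lia ClassicalEpsilon
  PropExtensionality FunctionalExtensionality Classical.
From Coquelicot Require Import Coquelicot.
Open Scope R_scope.

Lemma ele_refl x : ele x x.
Proof. destruct x; simpl; auto; lra. Qed.

Lemma ele_trans x y z : ele x y -> ele y z -> ele x z.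
Proof. destruct x, y, z; simpl; auto; try lra; tauto. Qed.

Lemma ele_antisym x y : ele x y -> ele y x -> x = y.
Proof. destruct x, y; simpl; try tauto; intros; f_equal; lra. Qed.

Lemma eadd_mono a b a' b' : ele a a' -> ele b b' -> ele (eadd a b) (eadd a' b').
Proof. destruct a, b, a', b'; simpl; auto; try lra; tauto. Qed.

Lemma einf_exists (P : ereal -> Prop) :
  (exists x, P x) -> (forall x, P x -> ele (Fin 0) x) -> exists v, is_einf P v.
Proof.
  intros [x0 Hx0] Hlb.
  destruct (classic (exists r, P (Fin r))) as [[r0 Hr0]|Hno].
  - set (E := fun y => P (Fin (- y))).
    assert (Hb : bound E).
    { exists 0. intros y Hy. specialize (Hlb _ Hy). simpl in Hlb. lra. }
    assert (He : exists y, E y) by (exists (- r0); unfold E; rewrite Ropp_involutive; auto).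
    destruct (completeness E Hb He) as [m [Hm1 Hm2]].
    exists (Fin (- m)). split.
    + intros [r|] Hr; simpl; auto.
      assert (Er : E (- r)) by (unfold E; rewrite Ropp_involutive; auto).
      specialize (Hm1 _ Er). lra.
    + intros [u|] Hu; simpl.
      * assert (m <= - u); [|lra].
        apply Hm2. intros y Hy. specialize (Hu _ Hy). simpl in Hu. lra.
      * exact (Hu _ Hr0).
  - exists PInf. split.
    + intros [r|] Hr; simpl; auto. exfalso; apply Hno; eauto.
    + intros [u|] Hu; simpl; auto.
Qed.

Lemma einf_spec P :
  (exists x, P x) -> (forall x, P x -> ele (Fin 0) x) -> is_einf P (einf P).
Proof. intros H1 H2. unfold einf. apply epsilon_spec, einf_exists; auto. Qed.

Lemma esup_exists (P : ereal -> Prop) : (exists x, P x) -> exists v, is_esup P v.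
Proof.
  intros [x0 Hx0].
  destruct (classic (P PInf)) as [HP|HP].
  { exists PInf. split; [intros x _; destruct x; simpl; auto | intros u Hu; apply Hu; auto]. }
  destruct x0 as [r0|]; [|contradiction].
  set (E := fun y => P (Fin y)).
  destruct (classic (bound E)) as [Hb|Hb].
  - destruct (completeness E Hb (ex_intro _ r0 Hx0)) as [m [Hm1 Hm2]].
    exists (Fin m). split.
    + intros [r|] Hr; simpl; [apply Hm1; auto | contradiction].
    + intros [u|] Hu; simpl; auto. apply Hm2. intros y Hy. apply (Hu (Fin y)); auto.
  - exists PInf. split.
    + intros x _; destruct x; simpl; auto.
    + intros [u|] Hu; simpl; auto. apply Hb. exists u. intros y Hy. apply (Hu (Fin y)); auto.
Qed.

Lemma esup_spec P : (exists x, P x) -> is_esup P (esup P).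
Proof. intros H. unfold esup. apply epsilon_spec, esup_exists; auto. Qed.

Lemma set_ext (A B : R -> Prop) : (forall x, A x <-> B x) -> A = B.
Proof.
  intro H. apply functional_extensionality; intro x; apply propositional_extensionality; auto.
Qed.

Lemma borel_ext A B : (forall x, A x <-> B x) -> borel A -> borel B.
Proof. intros H HA. rewrite <- (set_ext A B H). exact HA. Qed.

Lemma borel_interval a b : borel (fun x => a < x < b).
Proof. intros F _ H; apply H. Qed.

Lemma borel_setT : borel (fun _ => True).
Proof. intros F [H _] _; exact H. Qed.

Lemma borel_compl A : borel A -> borel (fun x => ~ A x).
Proof. intros HA F HF Hi. pose proof HF as [_ [HC _]]. apply HC, HA; auto. Qed.

Lemma borel_cunion (A : nat -> R -> Prop) :
  (forall n, borel (A n)) -> borel (fun x => exists n, A n x).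
Proof. intros HA F HF Hi. pose proof HF as [_ [_ HU]]. apply HU. intro n; apply HA; auto. Qed.

Lemma borel_set0 : borel (fun _ => False).
Proof. apply borel_ext with (fun x => ~ True); [tauto | apply borel_compl, borel_setT]. Qed.

Lemma borel_union A B : borel A -> borel B -> borel (fun x => A x \/ B x).
Proof.
  intros HA HB. apply borel_ext with (fun x => exists n : nat, (if Nat.eqb n 0 then A else B) x).
  - intro x; split.
    + intros [n Hn]; destruct (Nat.eqb n 0); auto.
    + intros [H|H]; [exists 0%nat | exists 1%nat]; auto.
  - apply borel_cunion. intro n; destruct (Nat.eqb n 0); auto.
Qed.

Lemma borel_inter A B : borel A -> borel B -> borel (fun x => A x /\ B x).
Proof.
  intros HA HB. apply borel_ext with (fun x => ~ (~ A x \/ ~ B x)); [intro x; tauto|].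
  apply borel_compl, borel_union; apply borel_compl; auto.
Qed.

Lemma borel_finite_union (B : nat -> R -> Prop) n :
  (forall i, (i < n)%nat -> borel (B i)) -> borel (fun x => exists i, (i < n)%nat /\ B i x).
Proof.
  intro HB.
  apply borel_ext with (fun x => exists i, (if Nat.ltb i n then B i else fun _ => False) x).
  - intro x; split.
    + intros [i Hi]; exists i; destruct (Nat.ltb_spec i n); [auto|contradiction].
    + intros [i [Hi Hx]]; exists i; destruct (Nat.ltb_spec i n); [auto|lia].
  - apply borel_cunion; intro i; destruct (Nat.ltb_spec i n); auto using borel_set0.
Qed.

Lemma nat_above (r : R) : exists n : nat, r < INR n.
Proof.
  destruct (archimed r) as [H _].
  destruct (Rle_or_lt 0 r) as [Hr|Hr]; [|exists 0%nat; simpl; lra].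
  exists (Z.to_nat (up r)). rewrite INR_IZR_INZ, Z2Nat.id; [lra|].
  apply le_IZR. lra.
Qed.

Lemma borel_lt b : borel (fun x => x < b).
Proof.
  apply borel_ext with (fun x => exists n : nat, b - INR n < x < b).
  - intro x; split; [intros [n Hn]; lra|].
    intro H. destruct (nat_above (b - x)) as [n Hn]. exists n. lra.
  - apply borel_cunion; intro; apply borel_interval.
Qed.

Lemma borel_gt a : borel (fun x => a < x).
Proof.
  apply borel_ext with (fun x => exists n : nat, a < x < a + INR n).
  - intro x; split; [intros [n Hn]; lra|].
    intro H. destruct (nat_above (x - a)) as [n Hn]. exists n. lra.
  - apply borel_cunion; intro; apply borel_interval.
Qed.

Lemma borel_ge a : borel (fun x => a <= x).
Proof. apply borel_ext with (fun x => ~ x < a); [intro; lra | apply borel_compl, borel_lt]. Qed.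

Lemma borel_le b : borel (fun x => x <= b).
Proof. apply borel_ext with (fun x => ~ b < x); [intro; lra | apply borel_compl, borel_gt]. Qed.

Lemma borel_unit_interval : borel unit_interval.
Proof. apply borel_inter; [apply borel_ge | apply borel_le]. Qed.

Lemma borel_singleton a : borel (fun x => x = a).
Proof.
  apply borel_ext with (fun x => a <= x /\ x <= a); [intro; lra|].
  apply borel_inter; [apply borel_ge | apply borel_le].
Qed.

Lemma sum_f_R0_rsum u m : sum_f_R0 u m = rsum u (Datatypes.S m).
Proof. induction m as [|m IHm]; simpl; [ring | rewrite IHm; simpl; ring]. Qed.

Lemma rsum_ext f g n : (forall i, (i < n)%nat -> f i = g i) -> rsum f n = rsum g n.
Proof. induction n; simpl; intros H; auto. rewrite IHn, H; auto; intros; apply H; lia. Qed.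

Lemma rsum_plus f g n : rsum (fun i => f i + g i) n = rsum f n + rsum g n.
Proof. induction n; simpl; [ring | rewrite IHn; ring]. Qed.

Lemma rsum_scal c f n : rsum (fun i => c * f i) n = c * rsum f n.
Proof. induction n; simpl; [ring | rewrite IHn; ring]. Qed.

Lemma rsum_le f g n : (forall i, (i < n)%nat -> f i <= g i) -> rsum f n <= rsum g n.
Proof.
  induction n; simpl; intros H; [lra|].
  pose proof (H n ltac:(lia)). pose proof (IHn ltac:(intros; apply H; lia)). lra.
Qed.

Lemma rsum_abs f n : Rabs (rsum f n) <= rsum (fun i => Rabs (f i)) n.
Proof.
  induction n; simpl; [rewrite Rabs_R0; lra|].
  eapply Rle_trans; [apply Rabs_triang | lra].
Qed.

Lemma rsum_swap (a : nat -> nat -> R) n m :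
  rsum (fun i => rsum (fun k => a i k) m) n = rsum (fun k => rsum (fun i => a i k) n) m.
Proof.
  induction n; simpl.
  - induction m; simpl; auto. rewrite <- IHm; ring.
  - rewrite IHn, <- rsum_plus. auto.
Qed.

Lemma rsum_eventually_zero u n m :
  (n <= m)%nat -> (forall i, (i >= n)%nat -> u i = 0) -> rsum u m = rsum u n.
Proof. intros Hle H. induction Hle; auto. simpl. rewrite IHHle, H; [ring | lia]. Qed.

Lemma infinite_sum_eventually_zero u n :
  (forall i, (i >= n)%nat -> u i = 0) -> infinite_sum u (rsum u n).
Proof.
  intros Hz eps He. exists n. intros m Hm. rewrite sum_f_R0_rsum.
  rewrite (rsum_eventually_zero u n (Datatypes.S m)); [|lia|auto].
  unfold Rdist. rewrite Rminus_diag, Rabs_R0; lra.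
Qed.

Lemma infinite_sum_const_eq0 c l : infinite_sum (fun _ => c) l -> c = 0.
Proof.
  intros H. destruct (Req_dec c 0) as [|Hc]; auto. exfalso.
  assert (Hp : Rabs c / 2 > 0) by (pose proof (Rabs_pos_lt c Hc); lra).
  destruct (H _ Hp) as [N HN].
  pose proof (HN N (le_n N)) as H1. pose proof (HN (Datatypes.S N) ltac:(lia)) as H2.
  unfold Rdist in *. simpl sum_f_R0 in H2.
  set (u := sum_f_R0 (fun _ => c) N) in *.
  assert (Rabs c <= Rabs (u + c - l) + Rabs (u - l)); [|lra].
  replace c with ((u + c - l) - (u - l)) at 1 by ring.
  eapply Rle_trans; [apply Rabs_triang | rewrite Rabs_Ropp; lra].
Qed.

Lemma infinite_sum_lin u v l1 l2 a b : infinite_sum u l1 -> infinite_sum v l2 ->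
  infinite_sum (fun n => a * u n + b * v n) (a * l1 + b * l2).
Proof.
  intros H1 H2.
  assert (Hc : forall c, Un_cv (fun _ : nat => c) c).
  { intros c eps He. exists 0%nat. intros. unfold Rdist. rewrite Rminus_diag, Rabs_R0; lra. }
  pose proof (CV_plus _ _ _ _ (CV_mult _ _ _ _ (Hc a) H1) (CV_mult _ _ _ _ (Hc b) H2)) as H.
  intros eps He. destruct (H eps He) as [N HN]. exists N. intros n Hn.
  assert (Hscal : forall c w, sum_f_R0 (fun i => c * w i) n = c * sum_f_R0 w n).
  { intros c w. rewrite scal_sum. apply sum_eq; intros; ring. }
  rewrite plus_sum, !Hscal. apply HN; auto.
Qed.

Lemma prior_ge0 mu A : prior mu -> borel A -> 0 <= mu A.
Proof. intros [H _] HA; auto. Qed.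

Lemma prior_set0 mu : prior mu -> mu (fun _ => False) = 0.
Proof.
  intros [_ [_ [_ Hc]]].
  specialize (Hc (fun _ _ => False) (fun _ => borel_set0) ltac:(auto)).
  replace (fun x : R => exists _ : nat, False) with (fun _ : R => False) in Hc
    by (apply set_ext; intro; split; [tauto | intros [_ []]]).
  eapply infinite_sum_const_eq0; eauto.
Qed.

Lemma prior_finite_additive mu (B : nat -> R -> Prop) n : prior mu ->
  (forall i, (i < n)%nat -> borel (B i)) ->
  (forall i j x, (i < n)%nat -> (j < n)%nat -> i <> j -> B i x -> B j x -> False) ->
  mu (fun x => exists i, (i < n)%nat /\ B i x) = rsum (fun i => mu (B i)) n.
Proof.
  intros Hp HB Hd.
  set (A := fun i => if Nat.ltb i n then B i else (fun _ : R => False)).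
  assert (HA : forall i, borel (A i)).
  { intro i; unfold A; destruct (Nat.ltb_spec i n); auto using borel_set0. }
  assert (HAd : forall m k x, m <> k -> A m x -> A k x -> False).
  { intros m k x Hmk; unfold A; destruct (Nat.ltb_spec m n), (Nat.ltb_spec k n); eauto. }
  pose proof Hp as [_ [_ [_ Hc]]]. specialize (Hc A HA HAd).
  replace (fun x => exists i, A i x) with (fun x => exists i, (i < n)%nat /\ B i x) in Hc.
  2:{ apply set_ext; intro x; split.
      - intros [i [Hi Hx]]; exists i; unfold A; destruct (Nat.ltb_spec i n); auto; lia.
      - intros [i Hx]; exists i; unfold A in Hx; destruct (Nat.ltb_spec i n); auto; contradiction. }
  assert (Hz : forall i, (i >= n)%nat -> mu (A i) = 0).
  { intros i Hi. unfold A. destruct (Nat.ltb_spec i n); [lia | apply prior_set0; auto]. }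
  rewrite (uniqueness_sum _ _ _ Hc (infinite_sum_eventually_zero _ n Hz)).
  apply rsum_ext. intros i Hi. unfold A. destruct (Nat.ltb_spec i n); auto; lia.
Qed.

Lemma prior_additive mu A B : prior mu -> borel A -> borel B ->
  (forall x, A x -> B x -> False) -> mu (fun x => A x \/ B x) = mu A + mu B.
Proof.
  intros Hp HA HB Hd.
  pose proof (prior_finite_additive mu (fun i => if Nat.eqb i 0 then A else B) 2 Hp) as H.
  simpl in H.
  replace (fun x => A x \/ B x)
    with (fun x => exists i, (i < 2)%nat /\ (if Nat.eqb i 0 then A else B) x).
  - rewrite H; [ring | |].
    + intros i Hi. destruct (Nat.eqb i 0); auto.
    + intros i j x Hi Hj Hij. destruct i as [|[|]], j as [|[|]]; simpl; try lia; eauto.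
  - apply set_ext; intro x; split.
    + intros [i [Hi Hx]]. destruct i as [|[|]]; simpl in Hx; auto; lia.
    + intros [Hx|Hx]; [exists 0%nat | exists 1%nat]; simpl; auto.
Qed.

Lemma prior_split mu A B : prior mu -> borel A -> borel B ->
  mu (fun x => A x \/ B x) = mu A + mu (fun x => B x /\ ~ A x).
Proof.
  intros Hp HA HB.
  replace (fun x => A x \/ B x) with (fun x => A x \/ (B x /\ ~ A x)).
  - apply prior_additive; auto using borel_inter, borel_compl. intros x H1 [_ H2]; auto.
  - apply set_ext; intro x. destruct (classic (A x)); tauto.
Qed.

Lemma prior_mono mu A B : prior mu -> borel A -> borel B ->
  (forall x, A x -> B x) -> mu A <= mu B.
Proof.
  intros Hp HA HB Hs.
  replace (mu B) with (mu (fun x => A x \/ B x))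
    by (f_equal; apply set_ext; intro x; split; [intros [H|H]|]; auto).
  rewrite prior_split; auto.
  pose proof (prior_ge0 mu _ Hp (borel_inter _ _ HB (borel_compl _ HA))). lra.
Qed.

Lemma prior_le1 mu A : prior mu -> borel A -> mu A <= 1.
Proof.
  intros Hp HA. pose proof Hp as [_ [H1 _]]. rewrite <- H1. apply prior_mono; auto using borel_setT.
Qed.

Lemma prior_subadditive mu A B : prior mu -> borel A -> borel B ->
  mu (fun x => A x \/ B x) <= mu A + mu B.
Proof.
  intros Hp HA HB. rewrite prior_split; auto.
  pose proof (prior_mono mu (fun x => B x /\ ~ A x) B Hp
    (borel_inter _ _ HB (borel_compl _ HA)) HB (fun x H => proj1 H)). lra.
Qed.

(** * Uniform grids and Riemann-Stieltjes sums *)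

(* Only grids with [1 <= N] are ever used; for [N = 0] the division below is junk. *)
Definition cell (N k : nat) (x : R) : Prop :=
  0 <= x <= 1 /\ INR k <= INR N * x < INR k + 1.

Definition grid_point (N k : nat) : R := INR k / INR N.

Definition riemann_sum (mu : (R -> Prop) -> R) (f : R -> R) (N : nat) : R :=
  rsum (fun k => mu (cell N k) * f (grid_point N k)) (Datatypes.S N).

Definition unif_cont (f : R -> R) : Prop :=
  forall eps, 0 < eps -> exists d, 0 < d /\ forall x y, 0 <= x <= 1 -> 0 <= y <= 1 ->
    Rabs (x - y) < d -> Rabs (f x - f y) < eps.

Definition is_expectation (mu : (R -> Prop) -> R) (f : R -> R) (r : R) : Prop :=
  forall eps, 0 < eps -> exists N0, forall N, (N0 <= N)%nat ->
    Rabs (riemann_sum mu f N - r) <= eps.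

Lemma INR_pos N : (1 <= N)%nat -> 0 < INR N.
Proof. intro; apply lt_0_INR; lia. Qed.

Lemma cell_bounds N k x : (1 <= N)%nat -> cell N k x <->
  0 <= x <= 1 /\ INR k / INR N <= x < (INR k + 1) / INR N.
Proof.
  intro HN. pose proof (INR_pos N HN) as Hp. unfold cell.
  rewrite Rle_div_l, <- Rlt_div_r by lra. rewrite (Rmult_comm x). tauto.
Qed.

Lemma borel_cell N k : (1 <= N)%nat -> borel (cell N k).
Proof.
  intro HN. eapply borel_ext; [intro x; symmetry; apply cell_bounds; auto|].
  apply borel_inter; [apply borel_unit_interval | apply borel_inter; [apply borel_ge | apply borel_lt]].
Qed.

Lemma cell_disjoint N k j x : cell N k x -> cell N j x -> k = j.
Proof.
  intros [_ [H1 H2]] [_ [H3 H4]].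
  assert (Hkj : INR k < INR (Datatypes.S j)) by (rewrite S_INR; lra).
  assert (Hjk : INR j < INR (Datatypes.S k)) by (rewrite S_INR; lra).
  apply INR_lt in Hkj; apply INR_lt in Hjk. lia.
Qed.

Lemma cell_cover N x : (1 <= N)%nat -> 0 <= x <= 1 ->
  exists k, (k < Datatypes.S N)%nat /\ cell N k x.
Proof.
  intros HN Hx. pose proof (INR_pos N HN) as Hp.
  set (r := INR N * x).
  assert (Hr : 0 <= r <= INR N) by (unfold r; nra).
  destruct (base_Int_part r) as [H1 H2].
  assert (Hz : (0 <= Int_part r)%Z).
  { assert (Hm : (-1 < Int_part r)%Z) by (apply lt_IZR; change (IZR (-1)) with (-1); lra). lia. }
  assert (Hk : INR (Z.to_nat (Int_part r)) = IZR (Int_part r))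
    by (rewrite INR_IZR_INZ, Z2Nat.id; auto).
  exists (Z.to_nat (Int_part r)). split.
  - assert (Hle : INR (Z.to_nat (Int_part r)) <= INR N) by lra. apply INR_le in Hle. lia.
  - unfold cell. fold r. rewrite Hk. split; [auto | lra].
Qed.

Lemma grid_point_unit N k : (1 <= N)%nat -> (k <= N)%nat -> 0 <= grid_point N k <= 1.
Proof.
  intros HN Hk. pose proof (INR_pos N HN). apply le_INR in Hk. unfold grid_point. split.
  - apply Rdiv_le_0_compat; [apply pos_INR | auto].
  - apply Rle_div_l; lra.
Qed.

Lemma cell_grid_point_close N k x : (1 <= N)%nat -> cell N k x ->
  0 <= x - grid_point N k < / INR N.
Proof.
  intros HN Hc. apply cell_bounds in Hc as [_ [H1 H2]]; auto. unfold grid_point.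
  unfold Rdiv in *. rewrite Rmult_plus_distr_r, Rmult_1_l in H2. lra.
Qed.

Lemma grid_fine d : 0 < d -> exists N0, (1 <= N0)%nat /\ forall N, (N0 <= N)%nat -> / INR N <= d.
Proof.
  intro Hd. destruct (nat_above (/ d)) as [n Hn].
  exists (Datatypes.S n). split; [lia|].
  intros N HN. apply le_INR in HN. rewrite S_INR in HN.
  pose proof (pos_INR n).
  replace d with (/ / d) by (field; lra). apply Rinv_le_contravar; [apply Rinv_0_lt_compat|]; lra.
Qed.

Lemma prior_cells mu N : prior mu -> (1 <= N)%nat ->
  rsum (fun k => mu (cell N k)) (Datatypes.S N) = 1.
Proof.
  intros Hp HN. rewrite <- prior_finite_additive; auto.
  - pose proof Hp as [_ [_ [H _]]]. rewrite <- H. f_equal. apply set_ext; intro x; split.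
    + intros [k [_ [Hx _]]]; exact Hx.
    + intro Hx. apply cell_cover; auto.
  - intros; apply borel_cell; auto.
  - intros i j x _ _ Hij H1 H2. apply Hij. eapply cell_disjoint; eauto.
Qed.

Lemma riemann_sum_ext mu f g N : (1 <= N)%nat -> (forall x, 0 <= x <= 1 -> f x = g x) ->
  riemann_sum mu f N = riemann_sum mu g N.
Proof.
  intros HN Hfg. unfold riemann_sum. apply rsum_ext. intros k Hk.
  rewrite Hfg; auto. apply grid_point_unit; lia.
Qed.

Lemma riemann_sum_plus mu f g N :
  riemann_sum mu (fun x => f x + g x) N = riemann_sum mu f N + riemann_sum mu g N.
Proof. unfold riemann_sum. rewrite <- rsum_plus. apply rsum_ext; intros; ring. Qed.

Lemma riemann_sum_scal mu c f N : riemann_sum mu (fun x => c * f x) N = c * riemann_sum mu f N.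
Proof. unfold riemann_sum. rewrite <- rsum_scal. apply rsum_ext; intros; ring. Qed.

Lemma riemann_sum_const mu c N : prior mu -> (1 <= N)%nat -> riemann_sum mu (fun _ => c) N = c.
Proof.
  intros Hp HN. unfold riemann_sum.
  rewrite (rsum_ext _ (fun k => c * mu (cell N k))) by (intros; ring).
  rewrite rsum_scal, prior_cells by auto. ring.
Qed.

Lemma riemann_sum_mono mu f g N : prior mu -> (1 <= N)%nat ->
  (forall x, 0 <= x <= 1 -> f x <= g x) -> riemann_sum mu f N <= riemann_sum mu g N.
Proof.
  intros Hp HN H. unfold riemann_sum. apply rsum_le. intros k Hk. apply Rmult_le_compat_l.
  - apply prior_ge0; auto; apply borel_cell; auto.
  - apply H, grid_point_unit; lia.
Qed.

Lemma riemann_sum_close mu f N c eps : prior mu -> (1 <= N)%nat ->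
  (forall k, (k <= N)%nat -> mu (cell N k) <> 0 -> Rabs (f (grid_point N k) - c) <= eps) ->
  Rabs (riemann_sum mu f N - c) <= eps.
Proof.
  intros Hp HN H.
  replace (riemann_sum mu f N - c) with (riemann_sum mu (fun x => f x + - c) N)
    by (rewrite riemann_sum_plus, riemann_sum_const; auto; ring).
  rewrite <- (riemann_sum_const mu eps N Hp HN).
  eapply Rle_trans; [apply rsum_abs | apply rsum_le]. intros k Hk.
  pose proof (prior_ge0 mu _ Hp (borel_cell N k HN)).
  rewrite Rabs_mult, Rabs_pos_eq by auto.
  destruct (Req_dec (mu (cell N k)) 0) as [E|E]; [rewrite E; lra|].
  apply Rmult_le_compat_l; auto. apply H; auto; lia.
Qed.

(** * The integral of a uniformly continuous function *)

Lemma lower_sum_0 mu f : lower_sum mu f 0.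
Proof. exists 0%nat, (fun _ _ => False), (fun _ => 0). repeat split; intros; try lia. Qed.

Lemma integral_ge_lower_sum mu f v : lower_sum mu f v -> ele (Fin v) (integral mu f).
Proof.
  intro H. apply (proj1 (esup_spec _ (ex_intro _ (Fin 0) (ex_intro _ 0 (conj (lower_sum_0 mu f) eq_refl))))).
  eauto.
Qed.

Lemma integral_le_of_upper mu f u :
  (forall v, lower_sum mu f v -> ele (Fin v) u) -> ele (integral mu f) u.
Proof.
  intro H. apply (proj2 (esup_spec _ (ex_intro _ (Fin 0) (ex_intro _ 0 (conj (lower_sum_0 mu f) eq_refl))))).
  intros x [v [Hv ->]]; auto.
Qed.

Lemma integral_ge0 mu f : ele (Fin 0) (integral mu f).
Proof. apply integral_ge_lower_sum, lower_sum_0. Qed.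

Lemma integral_mono mu f g :
  (forall x c, 0 <= x <= 1 -> 0 <= c -> ele (Fin c) (f x) -> ele (Fin c) (g x)) ->
  ele (integral mu f) (integral mu g).
Proof.
  intro H. apply integral_le_of_upper. intros v [n [A [c [H1 [H2 [H3 [H4 [H5 H6]]]]]]]].
  apply integral_ge_lower_sum. exists n, A, c. repeat (split; auto).
  intros i x Hi Hx. apply H; auto. apply (H2 i x); auto.
Qed.

Section GridApproximation.

Variables (mu : (R -> Prop) -> R) (f : R -> R) (eps d : R) (N : nat).
Hypotheses (Hmu : prior mu) (Hf : forall x, 0 <= x <= 1 -> 0 <= f x) (Heps : 0 < eps)
  (Hd : forall x y, 0 <= x <= 1 -> 0 <= y <= 1 -> Rabs (x - y) < d -> Rabs (f x - f y) < eps)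
  (HN : (1 <= N)%nat) (HNd : / INR N <= d).

Lemma cell_value_close k x : (k <= N)%nat -> cell N k x -> Rabs (f x - f (grid_point N k)) < eps.
Proof.
  intros Hk Hc. pose proof (cell_grid_point_close N k x HN Hc). destruct Hc as [Hx _].
  apply Hd; [exact Hx | apply grid_point_unit; auto | rewrite Rabs_pos_eq; lra].
Qed.

Lemma integral_ge_riemann_sum :
  ele (Fin (riemann_sum mu f N - eps)) (integral mu (fun x => Fin (f x))).
Proof.
  set (c := fun k => Rmax 0 (f (grid_point N k) - eps)).
  eapply ele_trans; [|apply (integral_ge_lower_sum mu _ (rsum (fun k => mu (cell N k) * c k) (Datatypes.S N)))].
  - unfold ele. replace (riemann_sum mu f N - eps) with (riemann_sum mu (fun x => f x + - eps) N)
      by (rewrite riemann_sum_plus, riemann_sum_const; auto; ring).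
    unfold riemann_sum. apply rsum_le. intros i Hi. apply Rmult_le_compat_l; [apply prior_ge0; auto; apply borel_cell; auto|].
    apply Rmax_r.
  - exists (Datatypes.S N), (cell N), c. refine (conj _ (conj _ (conj _ (conj _ (conj _ eq_refl))))).
    + intros; apply borel_cell; auto.
    + intros i x _ [Hx _]; exact Hx.
    + intros i j x _ _ Hij H1 H2; apply Hij; eapply cell_disjoint; eauto.
    + intros; apply Rmax_l.
    + intros i x Hi Hx. simpl. pose proof (cell_value_close i x ltac:(lia) Hx) as Hc.
      apply Rabs_def2 in Hc. destruct Hx as [Hx _]. pose proof (Hf x Hx).
      apply Rmax_lub; lra.
Qed.

(* A simple function below [f] is split along the grid cells; on each cell it stays below
   [f] at the grid point plus [eps]. *)
Lemma lower_sum_le_riemann_sum v : lower_sum mu (fun x => Fin (f x)) v ->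
  v <= riemann_sum mu f N + eps.
Proof.
  intros [n [A [c [HA [HAu [HAd [Hc [Hcf ->]]]]]]]].
  set (B := fun i k x => A i x /\ cell N k x).
  assert (HB : forall i k, (i < n)%nat -> borel (B i k)).
  { intros; apply borel_inter; auto; apply borel_cell; auto. }
  assert (Hsplit : forall i, (i < n)%nat -> mu (A i) = rsum (fun k => mu (B i k)) (Datatypes.S N)).
  { intros i Hi. rewrite <- prior_finite_additive; auto.
    - f_equal. apply set_ext; intro x; split.
      + intro Hx. destruct (cell_cover N x HN (HAu i x Hi Hx)) as [k [Hk Hck]].
        exists k; split; auto; split; auto.
      + intros [k [_ [Hx _]]]; auto.
    - intros j j' x _ _ Hjj [_ H1] [_ H2]; apply Hjj; eapply cell_disjoint; eauto. }
  assert (Hcell : forall k, (k < Datatypes.S N)%nat ->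
            rsum (fun i => mu (B i k)) n <= mu (cell N k)).
  { intros k Hk. rewrite <- prior_finite_additive; auto.
    - apply prior_mono; auto; [apply borel_finite_union; auto | apply borel_cell; auto |].
      intros x [i [_ [_ H]]]; auto.
    - intros i j x Hi Hj Hij [H1 _] [H2 _]; eapply HAd; eauto. }
  apply Rle_trans
    with (rsum (fun i => rsum (fun k => mu (B i k) * (f (grid_point N k) + eps)) (Datatypes.S N)) n).
  - apply rsum_le. intros i Hi. rewrite Hsplit, Rmult_comm, <- rsum_scal by auto.
    apply rsum_le. intros k Hk. rewrite Rmult_comm.
    destruct (classic (exists x, B i k x)) as [[x [HxA HxC]]|Hno].
    + apply Rmult_le_compat_l; [apply prior_ge0; auto|].
      pose proof (Hcf i x Hi HxA) as Hcx. simpl in Hcx.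
      pose proof (cell_value_close k x ltac:(lia) HxC) as Hv. apply Rabs_def2 in Hv. lra.
    + replace (B i k) with (fun _ : R => False)
        by (apply set_ext; intro x; split; [tauto | intro; apply Hno; eauto]).
      rewrite prior_set0; auto. right; ring.
  - rewrite rsum_swap.
    apply Rle_trans with (rsum (fun k => mu (cell N k) * (f (grid_point N k) + eps)) (Datatypes.S N)).
    + apply rsum_le. intros k Hk.
      rewrite (rsum_ext _ (fun i => (f (grid_point N k) + eps) * mu (B i k))) by (intros; ring).
      rewrite rsum_scal, (Rmult_comm (mu _)). apply Rmult_le_compat_l; auto.
      pose proof (Hf _ (grid_point_unit N k HN ltac:(lia))); lra.
    + right. rewrite (rsum_ext _ (fun k => mu (cell N k) * f (grid_point N k) + eps * mu (cell N k)))
        by (intros; ring).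
      rewrite rsum_plus, rsum_scal, prior_cells; auto. unfold riemann_sum. ring.
Qed.

Lemma integral_le_riemann_sum :
  ele (integral mu (fun x => Fin (f x))) (Fin (riemann_sum mu f N + eps)).
Proof. apply integral_le_of_upper. intros v Hv. apply lower_sum_le_riemann_sum; auto. Qed.

End GridApproximation.

Lemma integral_unif_cont mu f : prior mu -> (forall x, 0 <= x <= 1 -> 0 <= f x) -> unif_cont f ->
  exists r, integral mu (fun x => Fin (f x)) = Fin r /\ is_expectation mu f r.
Proof.
  intros Hp Hf Hu.
  destruct (Hu 1 ltac:(lra)) as [d1 [Hd1 Hd1']].
  destruct (grid_fine d1 Hd1) as [N1 [HN1 HN1']].
  pose proof (integral_le_riemann_sum mu f 1 d1 N1 Hp Hf ltac:(lra) Hd1' HN1 (HN1' N1 (le_n _))) as Hup.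
  destruct (integral mu (fun x => Fin (f x))) as [r|] eqn:Ei; [|contradiction].
  exists r; split; auto.
  intros eps He. destruct (Hu eps He) as [d [Hd Hd']].
  destruct (grid_fine d Hd) as [N0 [HN0 HN0']].
  exists N0. intros N HN.
  pose proof (integral_le_riemann_sum mu f eps d N Hp Hf He Hd' ltac:(lia) (HN0' N HN)) as U.
  pose proof (integral_ge_riemann_sum mu f eps d N Hp Hf Hd' ltac:(lia) (HN0' N HN)) as L.
  rewrite Ei in U, L. simpl in U, L. apply Rabs_le; lra.
Qed.

Lemma is_expectation_unique mu f r s : is_expectation mu f r -> is_expectation mu f s -> r = s.
Proof.
  intros H1 H2. destruct (Req_dec (r - s) 0) as [|Hne]; [lra|].
  assert (He : Rabs (r - s) / 3 > 0) by (pose proof (Rabs_pos_lt _ Hne); lra).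
  destruct (H1 _ He) as [N1 HN1]. destruct (H2 _ He) as [N2 HN2].
  specialize (HN1 (Nat.max N1 N2) ltac:(lia)). specialize (HN2 (Nat.max N1 N2) ltac:(lia)).
  set (x := riemann_sum mu f (Nat.max N1 N2)) in *.
  assert (Rabs (r - s) <= Rabs (x - r) + Rabs (x - s)); [|lra].
  replace (r - s) with (- (x - r) + (x - s)) by ring.
  eapply Rle_trans; [apply Rabs_triang | rewrite Rabs_Ropp; lra].
Qed.

Lemma is_expectation_ext mu f g r :
  (forall x, 0 <= x <= 1 -> f x = g x) -> is_expectation mu f r -> is_expectation mu g r.
Proof.
  intros Hfg H eps He. destruct (H eps He) as [N0 HN0]. exists (Nat.max N0 1). intros N HN.
  rewrite <- (riemann_sum_ext mu f g N); auto; [apply HN0|]; lia.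
Qed.

Lemma is_expectation_const mu c : prior mu -> is_expectation mu (fun _ => c) c.
Proof.
  intros Hp eps He. exists 1%nat. intros N HN.
  rewrite riemann_sum_const, Rminus_diag, Rabs_R0 by auto. lra.
Qed.

Lemma is_expectation_plus mu f g r s : is_expectation mu f r -> is_expectation mu g s ->
  is_expectation mu (fun x => f x + g x) (r + s).
Proof.
  intros H1 H2 eps He.
  destruct (H1 (eps/2) ltac:(lra)) as [N1 HN1]. destruct (H2 (eps/2) ltac:(lra)) as [N2 HN2].
  exists (Nat.max N1 N2). intros N HN. rewrite riemann_sum_plus.
  specialize (HN1 N ltac:(lia)); specialize (HN2 N ltac:(lia)).
  replace (riemann_sum mu f N + riemann_sum mu g N - (r + s))
    with ((riemann_sum mu f N - r) + (riemann_sum mu g N - s)) by ring.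
  eapply Rle_trans; [apply Rabs_triang | lra].
Qed.

Lemma is_expectation_scal mu c f r :
  is_expectation mu f r -> is_expectation mu (fun x => c * f x) (c * r).
Proof.
  intros H eps He. pose proof (Rabs_pos c) as Hc.
  destruct (H (eps / (Rabs c + 1))) as [N0 HN0]; [apply Rdiv_lt_0_compat; lra|].
  exists N0. intros N HN. specialize (HN0 N HN). rewrite riemann_sum_scal.
  replace (c * riemann_sum mu f N - c * r) with (c * (riemann_sum mu f N - r)) by ring.
  rewrite Rabs_mult. apply Rle_div_r in HN0; [|lra].
  pose proof (Rabs_pos (riemann_sum mu f N - r)). nra.
Qed.

Lemma is_expectation_mono mu f g r s : prior mu -> (forall x, 0 <= x <= 1 -> f x <= g x) ->
  is_expectation mu f r -> is_expectation mu g s -> r <= s.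
Proof.
  intros Hp Hfg H1 H2. apply Rnot_lt_le; intro Hlt.
  destruct (H1 ((r - s)/3) ltac:(lra)) as [N1 HN1]. destruct (H2 ((r - s)/3) ltac:(lra)) as [N2 HN2].
  set (N := Nat.max (Nat.max N1 N2) 1).
  specialize (HN1 N ltac:(unfold N; lia)); specialize (HN2 N ltac:(unfold N; lia)).
  pose proof (riemann_sum_mono mu f g N Hp ltac:(unfold N; lia) Hfg).
  apply Rabs_le_between in HN1; apply Rabs_le_between in HN2. lra.
Qed.

Lemma is_expectation_ge0 mu f r : prior mu -> (forall x, 0 <= x <= 1 -> 0 <= f x) ->
  is_expectation mu f r -> 0 <= r.
Proof. intros Hp Hf H. exact (is_expectation_mono mu _ f _ r Hp Hf (is_expectation_const mu 0 Hp) H). Qed.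

Lemma unif_cont_ext f g : (forall x, 0 <= x <= 1 -> f x = g x) -> unif_cont f -> unif_cont g.
Proof.
  intros E H eps He. destruct (H eps He) as [d [Hd H']]. exists d; split; auto.
  intros x y Hx Hy Hxy. rewrite <- !E by auto. auto.
Qed.

Lemma unif_cont_const c : unif_cont (fun _ => c).
Proof. intros eps He. exists 1. split; [lra|]. intros. rewrite Rminus_diag, Rabs_R0; auto. Qed.

Lemma unif_cont_plus f g : unif_cont f -> unif_cont g -> unif_cont (fun x => f x + g x).
Proof.
  intros H1 H2 eps He. destruct (H1 (eps/2) ltac:(lra)) as [d1 [Hd1 H1']].
  destruct (H2 (eps/2) ltac:(lra)) as [d2 [Hd2 H2']].
  exists (Rmin d1 d2). split; [apply Rmin_pos; auto|]. intros x y Hx Hy Hxy.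
  pose proof (Rmin_l d1 d2); pose proof (Rmin_r d1 d2).
  specialize (H1' x y Hx Hy ltac:(lra)); specialize (H2' x y Hx Hy ltac:(lra)).
  replace (f x + g x - (f y + g y)) with ((f x - f y) + (g x - g y)) by ring.
  eapply Rle_lt_trans; [apply Rabs_triang | lra].
Qed.

Lemma unif_cont_scal c f : unif_cont f -> unif_cont (fun x => c * f x).
Proof.
  intros H eps He. pose proof (Rabs_pos c) as Hc.
  destruct (H (eps / (Rabs c + 1))) as [d [Hd H']]; [apply Rdiv_lt_0_compat; lra|].
  exists d. split; auto. intros x y Hx Hy Hxy. specialize (H' x y Hx Hy Hxy).
  replace (c * f x - c * f y) with (c * (f x - f y)) by ring. rewrite Rabs_mult.
  apply Rlt_div_r in H'; [|lra]. pose proof (Rabs_pos (f x - f y)). nra.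
Qed.

Lemma unif_cont_max0 f : unif_cont f -> unif_cont (fun x => Rmax (f x) 0).
Proof.
  intros H eps He. destruct (H eps He) as [d [Hd H']]. exists d; split; auto.
  intros x y Hx Hy Hxy. specialize (H' x y Hx Hy Hxy).
  apply Rabs_def2 in H'. apply Rabs_def1;
  unfold Rmax; destruct (Rle_dec (f x) 0), (Rle_dec (f y) 0); lra.
Qed.

Lemma unif_cont_of_continuity f : (forall x, 0 <= x <= 1 -> continuity_pt f x) -> unif_cont f.
Proof.
  intros Hc eps He. destruct (Heine f _ (compact_P3 0 1) Hc (mkposreal eps He)) as [d Hd].
  exists d. split; [apply cond_pos|]. intros x y Hx Hy Hxy. apply (Hd x y); auto.
Qed.

Lemma is_expectation_exists mu f : prior mu -> unif_cont f -> exists r, is_expectation mu f r.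
Proof.
  intros Hp Hu.
  destruct (integral_unif_cont mu (fun x => Rmax (f x) 0) Hp ltac:(intros; apply Rmax_r)
    (unif_cont_max0 f Hu)) as [r1 [_ H1]].
  destruct (integral_unif_cont mu (fun x => Rmax (-1 * f x) 0) Hp ltac:(intros; apply Rmax_r)
    (unif_cont_max0 _ (unif_cont_scal (-1) f Hu))) as [r2 [_ H2]].
  exists (r1 + -1 * r2).
  apply is_expectation_ext with (fun x => Rmax (f x) 0 + -1 * Rmax (-1 * f x) 0).
  - intros x _. unfold Rmax. destruct (Rle_dec (f x) 0), (Rle_dec (-1 * f x) 0); lra.
  - apply is_expectation_plus; auto. apply is_expectation_scal; auto.
Qed.

Lemma integral_is_expectation mu f r : prior mu -> (forall x, 0 <= x <= 1 -> 0 <= f x) ->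
  unif_cont f -> is_expectation mu f r -> integral mu (fun x => Fin (f x)) = Fin r.
Proof.
  intros Hp Hf Hu He. destruct (integral_unif_cont mu f Hp Hf Hu) as [r' [E1 E2]].
  rewrite E1. f_equal. eapply is_expectation_unique; eauto.
Qed.

Lemma moments_nonneg nu p q : prior nu ->
  is_expectation nu (fun t => t) p -> is_expectation nu (fun t => t * t) q ->
  0 <= q /\ 0 <= p - q /\ 0 <= 1 - 2 * p + q.
Proof.
  intros Hp H1 H2. split; [|split].
  - apply (is_expectation_ge0 nu (fun t => t * t)); auto. intros; nra.
  - assert (0 <= p + -1 * q); [|lra].
    apply (is_expectation_ge0 nu (fun t => t + -1 * (t * t))); [auto | intros; nra |].
    apply is_expectation_plus, is_expectation_scal; auto.
  - assert (0 <= 1 + (-2 * p + q)); [|lra].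
    apply (is_expectation_ge0 nu (fun t => 1 + (-2 * t + t * t))); [auto | intros; nra |].
    apply is_expectation_plus; [apply is_expectation_const; auto|].
    apply is_expectation_plus, H2. apply is_expectation_scal; auto.
Qed.

Definition dirac (t : R) (A : R -> Prop) : R :=
  if excluded_middle_informative (A t) then 1 else 0.

Definition mix (a : R) (mu nu : (R -> Prop) -> R) (A : R -> Prop) : R :=
  (1 - a) * mu A + a * nu A.

Lemma dirac_prior t : 0 <= t <= 1 -> prior (dirac t).
Proof.
  intro Ht. unfold prior, dirac. split; [|split; [|split]].
  - intros A _. destruct (excluded_middle_informative (A t)); lra.
  - destruct (excluded_middle_informative True); tauto.
  - destruct (excluded_middle_informative (unit_interval t)); [auto | contradiction].
  - intros A _ Hd.
    set (u := fun n => if excluded_middle_informative (A n t) then 1 else 0).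
    destruct (excluded_middle_informative (exists n, A n t)) as [[n0 Hn0]|Hno].
    + assert (Hz : forall i, i <> n0 -> u i = 0).
      { intros i Hi. unfold u. destruct (excluded_middle_informative (A i t)); auto.
        exfalso; apply (Hd i n0 t); auto. }
      replace 1 with (rsum u (Datatypes.S n0)).
      * apply infinite_sum_eventually_zero. intros i Hi. apply Hz. lia.
      * simpl. rewrite (rsum_ext _ (fun _ => 0)) by (intros i Hi; apply Hz; lia).
        unfold u. destruct (excluded_middle_informative (A n0 t)); [|contradiction].
        clear. induction n0 as [|n0 IH]; simpl in *; lra.
    + apply (infinite_sum_eventually_zero u 0). intros i _. unfold u.
      destruct (excluded_middle_informative (A i t)); auto. exfalso; eauto.
Qed.

Lemma mix_prior a mu nu : 0 <= a <= 1 -> prior mu -> prior nu -> prior (mix a mu nu).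
Proof.
  intros Ha [m1 [m2 [m3 m4]]] [n1 [n2 [n3 n4]]]. unfold mix. split; [|split; [|split]].
  - intros A HA. specialize (m1 A HA); specialize (n1 A HA). nra.
  - rewrite m2, n2; ring.
  - rewrite m3, n3; ring.
  - intros A HA Hd. apply infinite_sum_lin; auto.
Qed.

Lemma is_expectation_mix a mu nu f r s : is_expectation mu f r -> is_expectation nu f s ->
  is_expectation (mix a mu nu) f ((1 - a) * r + a * s).
Proof.
  intros H1 H2 eps He.
  destruct (is_expectation_scal mu (1 - a) f r H1 (eps/2) ltac:(lra)) as [N1 HN1].
  destruct (is_expectation_scal nu a f s H2 (eps/2) ltac:(lra)) as [N2 HN2].
  exists (Nat.max N1 N2). intros N HN.
  specialize (HN1 N ltac:(lia)). specialize (HN2 N ltac:(lia)).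
  replace (riemann_sum (mix a mu nu) f N) with
    (riemann_sum mu (fun x => (1 - a) * f x) N + riemann_sum nu (fun x => a * f x) N)
    by (unfold riemann_sum, mix; rewrite <- rsum_plus; apply rsum_ext; intros; ring).
  replace (riemann_sum mu (fun x => (1 - a) * f x) N + riemann_sum nu (fun x => a * f x) N
           - ((1 - a) * r + a * s))
    with ((riemann_sum mu (fun x => (1 - a) * f x) N - (1 - a) * r)
          + (riemann_sum nu (fun x => a * f x) N - a * s)) by ring.
  eapply Rle_trans; [apply Rabs_triang | lra].
Qed.

Lemma is_expectation_dirac t f : 0 <= t <= 1 -> unif_cont f -> is_expectation (dirac t) f (f t).
Proof.
  intros Ht Hu eps He. destruct (Hu eps He) as [d [Hd Hd']].
  destruct (grid_fine d Hd) as [N0 [HN0 HN0']]. exists N0. intros N HN.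
  apply riemann_sum_close; [apply dirac_prior; auto | lia |].
  intros k Hk Hne. unfold dirac in Hne.
  destruct (excluded_middle_informative (cell N k t)) as [Hc|]; [|lra].
  pose proof (cell_grid_point_close N k t ltac:(lia) Hc). specialize (HN0' N HN).
  left. rewrite Rabs_minus_sym.
  apply Hd'; [exact Ht | apply grid_point_unit; lia | rewrite Rabs_pos_eq; lra].
Qed.

Lemma xlogx_0 : xlogx 0 = 0.
Proof. unfold xlogx; destruct (Req_EM_T 0 0); lra. Qed.

Lemma xlogx_eq x : x <> 0 -> xlogx x = x * ln x.
Proof. unfold xlogx; destruct (Req_EM_T x 0); auto; contradiction. Qed.

Lemma xlogx_1 : xlogx 1 = 0.
Proof. rewrite xlogx_eq, ln_1 by lra. ring. Qed.

(* Rocq's [ln] vanishes on nonpositive arguments. *)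
Lemma xlogx_neg y : y < 0 -> xlogx y = 0.
Proof.
  intro H. rewrite xlogx_eq by lra. unfold ln. case Rlt_dec; intros; [exfalso; lra | ring].
Qed.

Lemma ln_le_sub1 x : 0 < x -> ln x <= x - 1.
Proof. intro H. pose proof (exp_ineq1_le (ln x)). rewrite exp_ln in H0; lra. Qed.

(* From [ln (1 / sqrt y) <= 1 / sqrt y - 1]. *)
Lemma abs_xlnx_le_sqrt y : 0 < y <= 1 -> Rabs (y * ln y) <= 2 * sqrt y.
Proof.
  intros Hy. assert (Hs : 0 < sqrt y) by (apply sqrt_lt_R0; lra).
  assert (Hss : sqrt y * sqrt y = y) by (apply sqrt_sqrt; lra).
  assert (Hln : ln y <= 0) by (rewrite <- ln_1; apply ln_le; lra).
  rewrite Rabs_left1 by nra.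
  assert (E : ln y = 2 * ln (sqrt y)) by (rewrite <- Hss at 1; rewrite ln_mult by auto; ring).
  pose proof (ln_le_sub1 (/ sqrt y) ltac:(apply Rinv_0_lt_compat; auto)) as H.
  rewrite ln_Rinv in H by auto.
  assert (y * / sqrt y = sqrt y) by (rewrite <- Hss at 1; field; lra).
  rewrite E. nra.
Qed.

Lemma continuity_xlogx x : continuity_pt xlogx x.
Proof.
  destruct (Rtotal_order x 0) as [Hn|[->|Hp]].
  - apply continuity_pt_locally_ext with (fun _ => 0) (- x); [lra| |apply continuity_pt_const; intros ? ?; auto].
    intros y Hy. symmetry. apply xlogx_neg. unfold Rdist in Hy. apply Rabs_def2 in Hy. lra.
  - intros eps He. exists (Rmin 1 ((eps/2) * (eps/2))). split; [apply Rmin_pos; nra|].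
    intros y [_ Hy]. simpl in Hy |- *. unfold Rdist in Hy |- *.
    rewrite xlogx_0, Rminus_0_r in *.
    pose proof (Rmin_l 1 ((eps/2)*(eps/2))); pose proof (Rmin_r 1 ((eps/2)*(eps/2))).
    destruct (Rtotal_order y 0) as [Hn|[->|Hp]].
    + rewrite xlogx_neg, Rabs_R0; auto.
    + rewrite xlogx_0, Rabs_R0; auto.
    + rewrite xlogx_eq by lra. rewrite Rabs_pos_eq in Hy by lra.
      eapply Rle_lt_trans; [apply abs_xlnx_le_sqrt; lra|].
      assert (sqrt y < eps / 2); [|lra].
      rewrite <- (sqrt_Rsqr (eps/2)) by lra. apply sqrt_lt_1; unfold Rsqr; nra.
  - apply continuity_pt_locally_ext with (fun y => y * ln y) x; [lra| |].
    + intros y Hy. symmetry. apply xlogx_eq. unfold Rdist in Hy. apply Rabs_def2 in Hy. lra.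
    + apply derivable_continuous_pt. exists (1 * ln x + x * / x).
      apply derivable_pt_lim_mult; [apply derivable_pt_lim_id | apply derivable_pt_lim_ln; auto].
Qed.

Lemma continuity_id x : continuity_pt (fun y => y) x.
Proof. exact (derivable_continuous_pt _ _ (derivable_pt_id x)). Qed.

Lemma continuity_S x : continuity_pt S x.
Proof.
  unfold S. apply (continuity_pt_minus (fun t => - xlogx t) (fun t => xlogx (1 - t))).
  - apply (continuity_pt_opp xlogx), continuity_xlogx.
  - apply (continuity_pt_comp (fun t => 1 - t) xlogx); [|apply continuity_xlogx].
    apply (continuity_pt_minus (fun _ => 1)); [apply continuity_pt_const; intros ? ?; auto | apply continuity_id].
Qed.

Lemma unif_cont_S : unif_cont S.
Proof. apply unif_cont_of_continuity. intros; apply continuity_S. Qed.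

Lemma unif_cont_id : unif_cont (fun x => x).
Proof. apply unif_cont_of_continuity. intros; apply continuity_id. Qed.

Lemma unif_cont_sq : unif_cont (fun x => x * x).
Proof.
  apply unif_cont_of_continuity. intros.
  apply (continuity_pt_mult (fun y => y) (fun y => y)); apply continuity_id.
Qed.

(** * Null sets *)

Lemma borel_relatively_open (P : R -> Prop) :
  (forall x, 0 <= x <= 1 -> P x ->
     exists d, 0 < d /\ forall y, 0 <= y <= 1 -> Rabs (y - x) < d -> P y) ->
  borel (fun x => 0 <= x <= 1 /\ P x).
Proof.
  intro HP.
  set (J := fun (k i : nat) (x : R) =>
              (INR i - 1) / INR (Datatypes.S k) < x < (INR i + 1) / INR (Datatypes.S k)).
  set (good := fun k i => forall y, 0 <= y <= 1 -> J k i y -> P y).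
  apply borel_ext with (fun x => unit_interval x /\ exists k i,
    (if excluded_middle_informative (good k i) then J k i else fun _ => False) x).
  - intro x. split.
    + intros [Hx [k [i Hw]]]. split; auto.
      destruct (excluded_middle_informative (good k i)) as [Hg|]; [apply Hg; auto | contradiction].
    + intros [Hx Px]. split; auto. destruct (HP x Hx Px) as [d [Hd Hd']].
      destruct (grid_fine (d/2) ltac:(lra)) as [N [HN HN']]. specialize (HN' N (le_n _)).
      destruct N as [|k]; [lia|].
      destruct (cell_cover (Datatypes.S k) x HN Hx) as [i [_ Hc]].
      apply cell_bounds in Hc as [_ [Hi1 Hi2]]; auto.
      pose proof (INR_pos _ HN) as Hpos.
      set (s := / INR (Datatypes.S k)) in *.
      assert (Hs : 0 < s) by (apply Rinv_0_lt_compat; lra).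
      assert (E1 : (INR i + 1) * s = INR i * s + s) by ring.
      assert (E2 : (INR i - 1) * s = INR i * s - s) by ring.
      unfold Rdiv in Hi1, Hi2. fold s in Hi1, Hi2.
      exists k, i. destruct (excluded_middle_informative (good k i)) as [Hg|Hg].
      * unfold J, Rdiv. fold s. lra.
      * exfalso. apply Hg. intros y Hy [Hy1 Hy2]. apply Hd'; auto.
        unfold Rdiv in Hy1, Hy2. fold s in Hy1, Hy2.
        apply Rabs_def1; lra.
  - apply borel_inter; [apply borel_unit_interval|].
    apply borel_cunion; intro k. apply borel_cunion; intro i.
    destruct (excluded_middle_informative (good k i)); [apply borel_interval | apply borel_set0].
Qed.

Lemma borel_superlevel g c : unif_cont g -> borel (fun x => 0 <= x <= 1 /\ c < g x).
Proof.
  intro Hu. apply borel_relatively_open. intros x Hx Hgx.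
  destruct (Hu (g x - c) ltac:(lra)) as [d [Hd Hd']].
  exists d; split; auto. intros y Hy Hyx. specialize (Hd' y x Hy Hx Hyx).
  apply Rabs_def2 in Hd'. lra.
Qed.

(* Markov's inequality for a nonnegative function of zero mean. *)
Lemma prior_superlevel_null mu g c : prior mu -> unif_cont g ->
  (forall x, 0 <= x <= 1 -> 0 <= g x) -> is_expectation mu g 0 -> 0 < c ->
  mu (fun x => 0 <= x <= 1 /\ c < g x) = 0.
Proof.
  intros Hp Hu Hg He Hc. set (V := fun x => 0 <= x <= 1 /\ c < g x).
  assert (HV : borel V) by (apply borel_superlevel; auto).
  assert (L : lower_sum mu (fun x => Fin (g x)) (rsum (fun _ => mu V * c) 1)).
  { exists 1%nat, (fun _ => V), (fun _ => c).
    refine (conj _ (conj _ (conj _ (conj _ (conj _ eq_refl))))); auto.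
    - intros i x _ [Hx _]; exact Hx.
    - intros i j x Hi0 Hj0 Hij; lia.
    - intros; lra.
    - intros i x _ [_ Hx]; simpl; lra. }
  pose proof (integral_ge_lower_sum _ _ _ L) as H.
  rewrite (integral_is_expectation mu g 0 Hp Hg Hu He) in H. simpl in H.
  pose proof (prior_ge0 mu _ Hp HV). nra.
Qed.

Lemma prior_countable_union_null mu (V : nat -> R -> Prop) : prior mu ->
  (forall n, borel (V n)) -> (forall n, mu (V n) = 0) -> mu (fun x => exists n, V n x) = 0.
Proof.
  intros Hp HV H0.
  set (D := fun n x => V n x /\ ~ exists m, (m < n)%nat /\ V m x).
  assert (HD : forall n, borel (D n)).
  { intro n. apply borel_inter; [apply HV | apply borel_compl, borel_finite_union; auto]. }
  assert (HDd : forall m n x, m <> n -> D m x -> D n x -> False).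
  { intros m n x Hmn [Hm Hm'] [Hn Hn']. destruct (Nat.lt_total m n) as [Hl|[He|Hl]]; eauto. }
  assert (Hfirst : forall n x, V n x -> exists k, D k x).
  { induction n as [n IH] using lt_wf_ind. intros x Hx.
    destruct (classic (exists m, (m < n)%nat /\ V m x)) as [[m [Hm Hmx]]|Hno].
    - exact (IH m Hm x Hmx).
    - exists n. split; auto. }
  pose proof Hp as [_ [_ [_ Hc]]]. specialize (Hc D HD HDd).
  replace (fun x => exists n, V n x) with (fun x => exists n, D n x).
  - apply (uniqueness_sum _ _ _ Hc). apply (infinite_sum_eventually_zero _ 0).
    intros n _. apply Rle_antisym; [|apply prior_ge0; auto].
    rewrite <- (H0 n). apply prior_mono; auto. intros x [Hx _]; exact Hx.
  - apply set_ext; intro x; split; [intros [n [Hn _]]; eauto | intros [n Hn]; eapply Hfirst; eauto].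
Qed.

Lemma prior_positive_part_null mu g : prior mu -> unif_cont g ->
  (forall x, 0 <= x <= 1 -> 0 <= g x) -> is_expectation mu g 0 ->
  mu (fun x => 0 <= x <= 1 /\ 0 < g x) = 0.
Proof.
  intros Hp Hu Hg He.
  assert (Hpos : forall n : nat, 0 < / (INR n + 1)).
  { intro n. apply Rinv_0_lt_compat. pose proof (pos_INR n); lra. }
  replace (fun x => 0 <= x <= 1 /\ 0 < g x)
    with (fun x => exists n, 0 <= x <= 1 /\ / (INR n + 1) < g x).
  - apply prior_countable_union_null; auto.
    + intro n. apply borel_superlevel; auto.
    + intro n. apply prior_superlevel_null; auto.
  - apply set_ext; intro x; split.
    + intros [n [Hx Hgx]]. split; auto. pose proof (Hpos n); lra.
    + intros [Hx Hgx]. destruct (nat_above (/ g x)) as [n Hn]. exists n. split; auto.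
      assert (Hinv : 0 < / g x) by (apply Rinv_0_lt_compat; auto).
      rewrite <- (Rinv_inv (g x)). apply Rinv_lt_contravar; nra.
Qed.

Lemma prior_concentrated_on_zeros mu g (Z : R -> Prop) : prior mu -> borel Z -> unif_cont g ->
  (forall x, 0 <= x <= 1 -> 0 <= g x) -> is_expectation mu g 0 ->
  (forall x, 0 <= x <= 1 -> g x = 0 -> Z x) -> mu Z = 1.
Proof.
  intros Hp HZ Hu Hg He HgZ.
  pose proof (prior_positive_part_null mu g Hp Hu Hg He) as H0.
  assert (Hpos : borel (fun x => 0 <= x <= 1 /\ 0 < g x)) by (apply borel_superlevel; auto).
  pose proof Hp as [_ [_ [Hunit _]]].
  pose proof (prior_le1 mu _ Hp HZ).
  pose proof (prior_subadditive mu _ _ Hp HZ Hpos).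
  assert (mu unit_interval <= mu (fun x => Z x \/ (0 <= x <= 1 /\ 0 < g x))); [|lra].
  apply prior_mono; auto using borel_unit_interval, borel_union.
  intros x Hx. destruct (Req_dec (g x) 0) as [E|E]; [left; apply HgZ; auto | right; split; auto].
  pose proof (Hg x Hx). lra.
Qed.

(** * Gibbs' inequality and the conditional entropy *)

Lemma ln_1_div u : 0 < u -> ln (1 / u) = - ln u.
Proof. intro H. unfold Rdiv. rewrite Rmult_1_l. apply ln_Rinv; auto. Qed.

Lemma gibbs_term w W u : 0 <= w -> 0 < W -> 0 < u ->
  w * ln (1 / u) >= - (xlogx w - w * ln W) + (w - W * u).
Proof.
  intros Hw HW Hu. rewrite ln_1_div by auto.
  destruct (Req_dec w 0) as [->|Hne]; [rewrite xlogx_0; nra|].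
  rewrite xlogx_eq by auto. assert (Hwp : 0 < w) by lra.
  pose proof (ln_le_sub1 (W * u / w) ltac:(apply Rdiv_lt_0_compat; nra)) as H.
  unfold Rdiv in H. rewrite !ln_mult, ln_Rinv in H by (try apply Rinv_0_lt_compat; nra).
  assert (w * (W * u * / w) = W * u) by (field; lra).
  nra.
Qed.

Lemma gibbs_pair w1 w2 u v : 0 <= w1 -> 0 <= w2 -> 0 < u -> 0 < v ->
  w1 * ln (1 / u) + w2 * ln (1 / v) >=
  - (xlogx w1 + xlogx w2 - xlogx (w1 + w2)) - (w1 + w2) * (u + v - 1).
Proof.
  intros H1 H2 Hu Hv.
  destruct (Req_dec (w1 + w2) 0) as [E|E].
  - replace w1 with 0 in * by lra. replace w2 with 0 in * by lra.
    rewrite Rplus_0_r, xlogx_0. lra.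
  - assert (HW : 0 < w1 + w2) by lra.
    pose proof (gibbs_term w1 (w1 + w2) u H1 HW Hu). pose proof (gibbs_term w2 (w1 + w2) v H2 HW Hv).
    rewrite (xlogx_eq (w1 + w2)) by lra. nra.
Qed.

Lemma gibbs_pair_eq w1 w2 : 0 < w1 -> 0 < w2 ->
  w1 * ln (1 / (w1 / (w1 + w2))) + w2 * ln (1 / (w2 / (w1 + w2))) =
  - (xlogx w1 + xlogx w2 - xlogx (w1 + w2)).
Proof.
  intros H1 H2. rewrite !xlogx_eq by lra.
  rewrite !ln_1_div by (apply Rdiv_lt_0_compat; lra).
  rewrite !ln_div by lra. ring.
Qed.

(* The conditional entropy of y given x when (x, y) has cell probabilities
   P(1,1) = q, P(1,0) = P(0,1) = p - q, P(0,0) = 1 - 2p + q. *)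
Definition cond_entropy (p q : R) : R :=
  - (xlogx q + 2 * xlogx (p - q) + xlogx (1 - 2 * p + q) - xlogx p - xlogx (1 - p)).

(* The expected log-loss of predicting y with probabilities u1 = P(y=1|x=1), v1 = P(y=0|x=1),
   u0 = P(y=1|x=0), v0 = P(y=0|x=0) under those cell probabilities. *)
Definition log_loss (p q u1 v1 u0 v0 : R) : R :=
  q * ln (1 / u1) + (p - q) * (ln (1 / v1) + ln (1 / u0)) + (1 - 2 * p + q) * ln (1 / v0).

Lemma log_loss_ge p q u1 v1 u0 v0 eta : 0 <= q -> 0 <= p - q -> 0 <= 1 - 2 * p + q ->
  0 < u1 -> 0 < v1 -> 0 < u0 -> 0 < v0 -> u1 + v1 <= 1 + eta -> u0 + v0 <= 1 + eta ->
  log_loss p q u1 v1 u0 v0 >= cond_entropy p q - eta.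
Proof.
  intros Hq Hpq Hr Hu1 Hv1 Hu0 Hv0 H1 H0. unfold log_loss, cond_entropy.
  pose proof (gibbs_pair q (p - q) u1 v1 Hq Hpq Hu1 Hv1) as G1.
  pose proof (gibbs_pair (p - q) (1 - 2 * p + q) u0 v0 Hpq Hr Hu0 Hv0) as G2.
  replace (q + (p - q)) with p in G1 by ring.
  replace (p - q + (1 - 2 * p + q)) with (1 - p) in G2 by ring.
  nra.
Qed.

Definition bayes_d1 (p q : R) : R := q / p.
Definition bayes_d0 (p q : R) : R := (p - q) / (1 - p).

Lemma log_loss_bayes p q : 0 < q -> 0 < p - q -> 0 < 1 - 2 * p + q ->
  log_loss p q (bayes_d1 p q) (1 - bayes_d1 p q) (bayes_d0 p q) (1 - bayes_d0 p q) =
  cond_entropy p q.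
Proof.
  intros H1 H2 H3. unfold log_loss, cond_entropy, bayes_d1, bayes_d0.
  replace (1 - q / p) with ((p - q) / (q + (p - q))) by (field; lra).
  replace (1 - (p - q) / (1 - p)) with ((1 - 2 * p + q) / ((p - q) + (1 - 2 * p + q)))
    by (field; lra).
  replace (q / p) with (q / (q + (p - q))) by (f_equal; ring).
  replace ((p - q) / (1 - p)) with ((p - q) / ((p - q) + (1 - 2 * p + q))) by (f_equal; ring).
  pose proof (gibbs_pair_eq q (p - q) H1 H2) as G1.
  pose proof (gibbs_pair_eq (p - q) (1 - 2 * p + q) H2 H3) as G2.
  replace (q + (p - q)) with p in * by ring.
  replace (p - q + (1 - 2 * p + q)) with (1 - p) in * by ring.
  lra.
Qed.

Lemma log_loss_mix e p q p' q' u1 v1 u0 v0 :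
  log_loss ((1 - e) * p + e * p') ((1 - e) * q + e * q') u1 v1 u0 v0 =
  (1 - e) * log_loss p q u1 v1 u0 v0 + e * log_loss p' q' u1 v1 u0 v0.
Proof. unfold log_loss. ring. Qed.

(* Under a point mass the cell probabilities factor, so H(y|x) = S(t). *)
Lemma cond_entropy_point t : 0 <= t <= 1 -> cond_entropy t (t * t) = S t.
Proof.
  intro Ht. unfold cond_entropy, S.
  replace (t - t * t) with (t * (1 - t)) by ring.
  replace (1 - 2 * t + t * t) with ((1 - t) * (1 - t)) by ring.
  destruct (Req_dec t 0) as [->|H0].
  { rewrite !Rmult_0_l, Rminus_0_r, Rmult_1_l, xlogx_0, xlogx_1. ring. }
  destruct (Req_dec t 1) as [->|H1].
  { rewrite Rminus_diag, !Rmult_0_r, Rmult_1_l, xlogx_0, xlogx_1. ring. }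
  rewrite !xlogx_eq by nra. rewrite !ln_mult by lra. ring.
Qed.

Definition log_risk (u1 v1 u0 v0 t : R) : R := - S t + log_loss t (t * t) u1 v1 u0 v0.

Lemma log_risk_ge u1 v1 u0 v0 eta t : 0 < u1 -> 0 < v1 -> 0 < u0 -> 0 < v0 ->
  u1 + v1 <= 1 + eta -> u0 + v0 <= 1 + eta -> 0 <= t <= 1 -> log_risk u1 v1 u0 v0 t >= - eta.
Proof.
  intros Hu1 Hv1 Hu0 Hv0 H1 H0 Ht. unfold log_risk. rewrite <- cond_entropy_point by auto.
  pose proof (log_loss_ge t (t * t) u1 v1 u0 v0 eta ltac:(nra) ltac:(nra) ltac:(nra)
    Hu1 Hv1 Hu0 Hv0 H1 H0). lra.
Qed.

Lemma log_risk_quadratic u1 v1 u0 v0 t : log_risk u1 v1 u0 v0 t =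
  -1 * S t + ((ln (1 / u1) - (ln (1 / v1) + ln (1 / u0)) + ln (1 / v0)) * (t * t)
              + ((ln (1 / v1) + ln (1 / u0) - 2 * ln (1 / v0)) * t + ln (1 / v0))).
Proof. unfold log_risk, log_loss. ring. Qed.

Lemma unif_cont_log_risk u1 v1 u0 v0 : unif_cont (log_risk u1 v1 u0 v0).
Proof.
  eapply unif_cont_ext; [intros t _; symmetry; apply log_risk_quadratic|].
  apply unif_cont_plus; [apply unif_cont_scal, unif_cont_S|].
  apply unif_cont_plus; [apply unif_cont_scal, unif_cont_sq|].
  apply unif_cont_plus; [apply unif_cont_scal, unif_cont_id | apply unif_cont_const].
Qed.

Lemma is_expectation_log_risk nu p q s u1 v1 u0 v0 : prior nu ->
  is_expectation nu (fun t => t) p -> is_expectation nu (fun t => t * t) q ->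
  is_expectation nu S s ->
  is_expectation nu (log_risk u1 v1 u0 v0) (- s + log_loss p q u1 v1 u0 v0).
Proof.
  intros Hp H1 H2 HS.
  eapply is_expectation_ext; [intros t _; symmetry; apply log_risk_quadratic|].
  replace (- s + log_loss p q u1 v1 u0 v0) with
    (-1 * s + ((ln (1 / u1) - (ln (1 / v1) + ln (1 / u0)) + ln (1 / v0)) * q
               + ((ln (1 / v1) + ln (1 / u0) - 2 * ln (1 / v0)) * p + ln (1 / v0))))
    by (unfold log_loss; ring).
  apply is_expectation_plus; [apply is_expectation_scal; auto|].
  apply is_expectation_plus; [apply is_expectation_scal; auto|].
  apply is_expectation_plus; [apply is_expectation_scal; auto | apply is_expectation_const; auto].
Qed.

Lemma clog_pos c d : 0 < d -> clog c d = Fin (c * ln (1 / d)).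
Proof.
  intro H. unfold clog. destruct (Req_EM_T c 0) as [->|]; [f_equal; ring|].
  destruct (Req_EM_T d 0); [lra | auto].
Qed.

Lemma clog_ge_truncated c d eta : 0 <= c -> 0 <= d -> 0 < eta ->
  ele (Fin (c * ln (1 / Rmax d eta))) (clog c d).
Proof.
  intros Hc Hd He. unfold clog. destruct (Req_EM_T c 0) as [->|Hc0]; [simpl; lra|].
  destruct (Req_EM_T d 0) as [->|Hd0]; simpl; auto.
  pose proof (Rmax_l d eta).
  apply Rmult_le_compat_l; auto. rewrite !ln_1_div by lra.
  apply Ropp_le_contravar, ln_le; lra.
Qed.

Lemma ele_eadd4 s x1 x2 x3 x4 y1 y2 y3 y4 :
  ele (Fin x1) y1 -> ele (Fin x2) y2 -> ele (Fin x3) y3 -> ele (Fin x4) y4 ->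
  ele (Fin (s + (x1 + (x2 + (x3 + x4))))) (eadd (Fin s) (eadd y1 (eadd y2 (eadd y3 y4)))).
Proof.
  intros H1 H2 H3 H4.
  change (Fin (s + (x1 + (x2 + (x3 + x4)))))
    with (eadd (Fin s) (eadd (Fin x1) (eadd (Fin x2) (eadd (Fin x3) (Fin x4))))).
  apply eadd_mono; [apply ele_refl|].
  repeat apply eadd_mono; auto.
Qed.

Lemma risk_interior d0 d1 t : 0 < d0 < 1 -> 0 < d1 < 1 ->
  risk d0 d1 t = Fin (log_risk d1 (1 - d1) d0 (1 - d0) t).
Proof.
  intros H0 H1. unfold risk. rewrite !clog_pos by lra. simpl. f_equal.
  unfold log_risk, log_loss. ring.
Qed.

(* Truncating the predicted probabilities at [eta] removes the infinite log-losses. *)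
Definition truncated_risk (d0 d1 eta : R) : R -> R :=
  log_risk (Rmax d1 eta) (Rmax (1 - d1) eta) (Rmax d0 eta) (Rmax (1 - d0) eta).

Lemma risk_ge_truncated d0 d1 eta t : 0 <= d0 <= 1 -> 0 <= d1 <= 1 -> 0 < eta -> 0 <= t <= 1 ->
  ele (Fin (truncated_risk d0 d1 eta t)) (risk d0 d1 t).
Proof.
  intros H0 H1 He Ht.
  replace (truncated_risk d0 d1 eta t) with
    (- S t + (t ^ 2 * ln (1 / Rmax d1 eta) + (t * (1 - t) * ln (1 / Rmax (1 - d1) eta) +
     (t * (1 - t) * ln (1 / Rmax d0 eta) + (1 - t) ^ 2 * ln (1 / Rmax (1 - d0) eta)))))
    by (unfold truncated_risk, log_risk, log_loss; ring).
  apply ele_eadd4; apply clog_ge_truncated; try lra; nra.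
Qed.

Lemma truncated_sum_le d eta : 0 <= d <= 1 -> 0 < eta <= 1/2 ->
  Rmax d eta + Rmax (1 - d) eta <= 1 + eta.
Proof. intros. unfold Rmax. destruct (Rle_dec d eta), (Rle_dec (1 - d) eta); lra. Qed.

Lemma truncated_pos d eta : 0 < eta -> 0 < Rmax d eta.
Proof. intros. pose proof (Rmax_r d eta); lra. Qed.

Lemma ele_fin_of_approx a x : (forall eta, 0 < eta <= 1/2 -> ele (Fin (a - eta)) x) -> ele (Fin a) x.
Proof.
  intro H. destruct x as [v|]; simpl; auto. apply Rnot_lt_le. intro Hlt.
  pose proof (Rmin_r (1/2) ((a - v) / 2)).
  assert (He : 0 < Rmin (1/2) ((a - v) / 2) <= 1/2) by (split; [apply Rmin_pos; lra | apply Rmin_l]).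
  pose proof (H _ He) as Hv. simpl in Hv. lra.
Qed.

Lemma risk_ge0 d0 d1 t : 0 <= d0 <= 1 -> 0 <= d1 <= 1 -> 0 <= t <= 1 ->
  ele (Fin 0) (risk d0 d1 t).
Proof.
  intros H0 H1 Ht. apply ele_fin_of_approx. intros eta He.
  eapply ele_trans; [|apply (risk_ge_truncated d0 d1 eta t); auto; lra].
  simpl. apply Rge_le. rewrite Rminus_0_l.
  apply log_risk_ge; try apply truncated_pos; try apply truncated_sum_le; lra.
Qed.

Section RiskLowerBound.

Variables (nu : (R -> Prop) -> R) (p q s d0 d1 : R).
Hypotheses (Hnu : prior nu) (Hp : is_expectation nu (fun t => t) p)
  (Hq : is_expectation nu (fun t => t * t) q) (Hs : is_expectation nu S s)
  (Hd0 : 0 <= d0 <= 1) (Hd1 : 0 <= d1 <= 1).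

Lemma integral_risk_ge_truncated eta : 0 < eta <= 1/2 ->
  ele (Fin (cond_entropy p q - s - eta)) (integral nu (risk d0 d1)).
Proof.
  intros He. destruct (moments_nonneg nu p q Hnu Hp Hq) as [Hq0 [Hpq Hr]].
  set (F := truncated_risk d0 d1 eta).
  set (Fp := fun t => Rmax (F t) 0).
  assert (HF : unif_cont F) by apply unif_cont_log_risk.
  destruct (is_expectation_exists nu Fp Hnu (unif_cont_max0 _ HF)) as [rp Hrp].
  pose proof (is_expectation_log_risk nu p q s (Rmax d1 eta) (Rmax (1 - d1) eta)
    (Rmax d0 eta) (Rmax (1 - d0) eta) Hnu Hp Hq Hs) as HEF.
  pose proof (is_expectation_mono nu F Fp _ _ Hnu ltac:(intros; apply Rmax_l) HEF Hrp) as Hmono.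
  pose proof (log_loss_ge p q (Rmax d1 eta) (Rmax (1 - d1) eta) (Rmax d0 eta) (Rmax (1 - d0) eta)
    eta Hq0 Hpq Hr ltac:(apply truncated_pos; lra) ltac:(apply truncated_pos; lra)
    ltac:(apply truncated_pos; lra) ltac:(apply truncated_pos; lra)
    ltac:(apply truncated_sum_le; lra) ltac:(apply truncated_sum_le; lra)) as Hloss.
  eapply ele_trans; [|apply integral_mono with (f := fun x => Fin (Fp x))].
  - rewrite (integral_is_expectation nu Fp rp Hnu ltac:(intros; apply Rmax_r)
      (unif_cont_max0 _ HF) Hrp). simpl. lra.
  - intros x c Hx Hc Hcx. simpl in Hcx. unfold Fp in Hcx.
    destruct (Rle_dec 0 (F x)).
    + rewrite Rmax_left in Hcx by lra.
      eapply ele_trans; [|apply (risk_ge_truncated d0 d1 eta x); auto; lra]. exact Hcx.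
    + rewrite Rmax_right in Hcx by lra. replace c with 0 by lra. apply risk_ge0; auto.
Qed.

Lemma integral_risk_ge : ele (Fin (cond_entropy p q - s)) (integral nu (risk d0 d1)).
Proof. apply ele_fin_of_approx. exact integral_risk_ge_truncated. Qed.

End RiskLowerBound.

Lemma I_spec nu : is_einf (fun e => exists d0 d1, unit_interval d0 /\ unit_interval d1 /\
                                      e = integral nu (risk d0 d1)) (I nu).
Proof.
  apply einf_spec.
  - exists (integral nu (risk 0 0)), 0, 0. unfold unit_interval. repeat split; lra.
  - intros x [d0 [d1 [_ [_ ->]]]]. apply integral_ge0.
Qed.

Lemma I_le_integral nu d0 d1 : 0 <= d0 <= 1 -> 0 <= d1 <= 1 ->
  ele (I nu) (integral nu (risk d0 d1)).
Proof. intros. apply (proj1 (I_spec nu)). exists d0, d1. auto. Qed.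

Lemma I_ge_cond_entropy nu p q s : prior nu -> is_expectation nu (fun t => t) p ->
  is_expectation nu (fun t => t * t) q -> is_expectation nu S s ->
  ele (Fin (cond_entropy p q - s)) (I nu).
Proof.
  intros. apply (proj2 (I_spec nu)). intros x [d0 [d1 [Hd0 [Hd1 ->]]]].
  apply integral_risk_ge; auto.
Qed.

Definition positive_cells (p q : R) : Prop := 0 < q /\ 0 < p - q /\ 0 < 1 - 2 * p + q.

Definition bayes_risk (p q : R) : R -> R :=
  log_risk (bayes_d1 p q) (1 - bayes_d1 p q) (bayes_d0 p q) (1 - bayes_d0 p q).

Lemma bayes_decision_interior p q : positive_cells p q ->
  0 < bayes_d0 p q < 1 /\ 0 < bayes_d1 p q < 1.
Proof.
  intros [H1 [H2 H3]]. unfold bayes_d0, bayes_d1.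
  split; split; try (apply Rdiv_lt_0_compat; lra); apply Rlt_div_l; lra.
Qed.

Lemma bayes_risk_ge0 p q t : positive_cells p q -> 0 <= t <= 1 -> 0 <= bayes_risk p q t.
Proof.
  intros Hc Ht. destruct (bayes_decision_interior p q Hc) as [H0 H1].
  apply Rge_le. rewrite <- Ropp_0. apply log_risk_ge; auto; lra.
Qed.

Lemma is_expectation_bayes_risk mu p q s : prior mu -> is_expectation mu (fun t => t) p ->
  is_expectation mu (fun t => t * t) q -> is_expectation mu S s -> positive_cells p q ->
  is_expectation mu (bayes_risk p q) (cond_entropy p q - s).
Proof.
  intros Hp H1 H2 H3 [c1 [c2 c3]].
  replace (cond_entropy p q - s) with
    (- s + log_loss p q (bayes_d1 p q) (1 - bayes_d1 p q) (bayes_d0 p q) (1 - bayes_d0 p q))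
    by (rewrite log_loss_bayes by auto; ring).
  apply is_expectation_log_risk; auto.
Qed.

Lemma I_eq_cond_entropy mu p q s : prior mu -> is_expectation mu (fun t => t) p ->
  is_expectation mu (fun t => t * t) q -> is_expectation mu S s -> positive_cells p q ->
  I mu = Fin (cond_entropy p q - s).
Proof.
  intros Hp H1 H2 H3 Hc. apply ele_antisym; [|apply I_ge_cond_entropy; auto].
  destruct (bayes_decision_interior p q Hc) as [Hd0 Hd1].
  eapply ele_trans; [apply (I_le_integral mu (bayes_d0 p q) (bayes_d1 p q)); lra|].
  replace (risk (bayes_d0 p q) (bayes_d1 p q)) with (fun t => Fin (bayes_risk p q t))
    by (apply functional_extensionality; intro t; rewrite risk_interior; auto).
  rewrite (integral_is_expectation mu (bayes_risk p q) (cond_entropy p q - s)); auto.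
  - apply ele_refl.
  - intros; apply bayes_risk_ge0; auto.
  - apply unif_cont_log_risk.
  - apply is_expectation_bayes_risk; auto.
Qed.

(** * Perturbing a latent information prior by a point mass *)

Lemma log_loss_bayes_ge P Q p q : positive_cells P Q ->
  0 <= q -> 0 <= p - q -> 0 <= 1 - 2 * p + q ->
  log_loss p q (bayes_d1 P Q) (1 - bayes_d1 P Q) (bayes_d0 P Q) (1 - bayes_d0 P Q) >= cond_entropy p q.
Proof.
  intros Hc Hq Hpq Hr. destruct (bayes_decision_interior P Q Hc) as [H0 H1].
  rewrite <- (Rminus_0_r (cond_entropy p q)). apply log_loss_ge; auto; lra.
Qed.

Lemma positive_cells_mix p q t e : positive_cells p q -> 0 <= t <= 1 -> 0 < e < 1 ->
  positive_cells ((1 - e) * p + e * t) ((1 - e) * q + e * (t * t)).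
Proof.
  intros [H1 [H2 H3]] Ht He.
  assert (0 < (1 - e) * q) by (apply Rmult_lt_0_compat; lra).
  assert (0 < (1 - e) * (p - q)) by (apply Rmult_lt_0_compat; lra).
  assert (0 < (1 - e) * (1 - 2 * p + q)) by (apply Rmult_lt_0_compat; lra).
  assert (0 <= e * (t * t)) by (apply Rmult_le_pos; nra).
  assert (0 <= e * (t * (1 - t))) by (apply Rmult_le_pos; nra).
  assert (0 <= e * ((1 - t) * (1 - t))) by (apply Rmult_le_pos; nra).
  repeat split; nra.
Qed.

Lemma le_of_continuity_at_0 (phi : R -> R) c : continuity_pt phi 0 ->
  (forall e, 0 < e < 1 -> phi e <= c) -> phi 0 <= c.
Proof.
  intros Hc H. apply Rnot_lt_le. intro Hlt.
  destruct (Hc (phi 0 - c) ltac:(lra)) as [d [Hd Hd']].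
  set (e := Rmin (d / 2) (1 / 2)).
  assert (e <= d / 2) by apply Rmin_l. assert (e <= 1 / 2) by apply Rmin_r.
  assert (0 < e) by (apply Rmin_pos; lra).
  assert (Hde : Rabs (e - 0) < d) by (rewrite Rminus_0_r, Rabs_pos_eq; lra).
  destruct (Req_dec e 0) as [|Hne]; [lra|].
  specialize (Hd' e (conj (conj Logic.I (not_eq_sym Hne)) Hde)). simpl in Hd'. unfold Rdist in Hd'.
  specialize (H e ltac:(lra)). apply Rabs_def2 in Hd'. lra.
Qed.

Section Perturbation.

Variables (mu : (R -> Prop) -> R) (p q s : R).
Hypotheses (Hlat : latent_information_prior mu) (Hp : is_expectation mu (fun t => t) p)
  (Hq : is_expectation mu (fun t => t * t) q) (Hs : is_expectation mu S s)
  (Hc : positive_cells p q).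

(* Compare I at the maximizer with I at the mixture (1-e) mu + e dirac t, bounded below
   through the Bayes decision of the mixture. *)
Lemma bayes_risk_mix_le t e : 0 <= t <= 1 -> 0 < e < 1 ->
  bayes_risk ((1 - e) * p + e * t) ((1 - e) * q + e * (t * t)) t <= cond_entropy p q - s.
Proof.
  intros Ht He. destruct Hlat as [Hmu Hmax].
  set (P := (1 - e) * p + e * t). set (Q := (1 - e) * q + e * (t * t)).
  set (nu := mix e mu (dirac t)).
  assert (Hnu : prior nu) by (apply mix_prior; [lra | auto | apply dirac_prior; auto]).
  assert (E1 : is_expectation nu (fun t => t) P)
    by (apply is_expectation_mix; auto; apply (is_expectation_dirac t (fun t => t)); auto using unif_cont_id).
  assert (E2 : is_expectation nu (fun t => t * t) Q)
    by (apply is_expectation_mix; auto; apply (is_expectation_dirac t (fun t => t * t)); auto using unif_cont_sq).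
  assert (E3 : is_expectation nu S ((1 - e) * s + e * S t))
    by (apply is_expectation_mix; auto; apply (is_expectation_dirac t S); auto using unif_cont_S).
  pose proof (ele_trans _ _ _ (I_ge_cond_entropy nu P Q _ Hnu E1 E2 E3) (Hmax nu Hnu)) as HI.
  rewrite (I_eq_cond_entropy mu p q s Hmu Hp Hq Hs Hc) in HI. simpl in HI.
  pose proof (positive_cells_mix p q t e Hc Ht He) as HcPQ. fold P Q in HcPQ.
  destruct (moments_nonneg mu p q Hmu Hp Hq) as [Hq0 [Hpq Hr]].
  pose proof (log_loss_bayes_ge P Q p q HcPQ Hq0 Hpq Hr) as Hge.
  set (L := fun p q =>
    log_loss p q (bayes_d1 P Q) (1 - bayes_d1 P Q) (bayes_d0 P Q) (1 - bayes_d0 P Q)).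
  change (L p q >= cond_entropy p q) in Hge.
  assert (HL : cond_entropy P Q = (1 - e) * L p q + e * L t (t * t)).
  { destruct HcPQ as [c1 [c2 c3]]. rewrite <- (log_loss_bayes P Q c1 c2 c3).
    unfold L, P, Q. apply log_loss_mix. }
  rewrite HL in HI. change (bayes_risk P Q t) with (- S t + L t (t * t)).
  apply Rmult_le_reg_l with e; [lra|]. nra.
Qed.

Lemma bayes_risk_le t : 0 <= t <= 1 -> bayes_risk p q t <= cond_entropy p q - s.
Proof.
  intros Ht.
  set (phi := fun e => bayes_risk ((1 - e) * p + e * t) ((1 - e) * q + e * (t * t)) t).
  replace (bayes_risk p q t) with (phi 0) by (unfold phi; f_equal; ring).
  apply le_of_continuity_at_0; [|intros; apply bayes_risk_mix_le; auto].
  destruct Hc as [c1 [c2 c3]].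
  apply derivable_continuous_pt, ex_derive_Reals_0.
  unfold phi, bayes_risk, log_risk, log_loss, bayes_d1, bayes_d0. auto_derive.
  replace (1 + - 0) with 1 by ring. rewrite !Rmult_1_l, !Rmult_0_l, !Rplus_0_r.
  assert (A1 : 0 < q * / p) by (apply Rmult_lt_0_compat; [lra | apply Rinv_0_lt_compat; lra]).
  assert (A2 : q * / p < 1) by (apply Rlt_div_l; lra).
  assert (A3 : 0 < (p + - q) * / (1 + - p))
    by (apply Rmult_lt_0_compat; [lra | apply Rinv_0_lt_compat; lra]).
  assert (A4 : (p + - q) * / (1 + - p) < 1) by (apply Rlt_div_l; lra).
  repeat apply conj; try exact Logic.I;
    first [ apply Rinv_0_lt_compat; lra | apply Rgt_not_eq; lra ].
Qed.

End Perturbation.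

(** * Zeros of an entropy-minus-quadratic function *)

Definition ent_gap (c A B C t : R) : R :=
  c - t * ln t - (1 - t) * ln (1 - t) - (t * t * A + t * (1 - t) * B + (1 - t) * (1 - t) * C).

Definition ent_gap' (A B C t : R) : R :=
  ln (1 - t) - ln t - 2 * A * t - B * (1 - 2 * t) + 2 * C * (1 - t).

Definition ent_gap'' (A B C t : R) : R := - / (1 - t) - / t - 2 * A + 2 * B - 2 * C.

Lemma derivable_pt_lim_ent_gap c A B C t : 0 < t < 1 ->
  derivable_pt_lim (ent_gap c A B C) t (ent_gap' A B C t).
Proof.
  intro Ht. apply is_derive_Reals. unfold ent_gap, ent_gap'. auto_derive; [lra|].
  replace (1 + - t) with (1 - t) by ring. field. lra.
Qed.

Lemma derivable_pt_lim_ent_gap' A B C t : 0 < t < 1 ->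
  derivable_pt_lim (ent_gap' A B C) t (ent_gap'' A B C t).
Proof.
  intro Ht. apply is_derive_Reals. unfold ent_gap', ent_gap''. auto_derive; [lra|].
  replace (1 + - t) with (1 - t) by ring. field. lra.
Qed.

Lemma derivative_zero_at_min f z l : 0 < z < 1 -> (forall x, 0 < x < 1 -> f z <= f x) ->
  derivable_pt_lim f z l -> l = 0.
Proof.
  intros Hz Hmin Hd. rewrite <- (derive_pt_eq_0 f z l (exist _ l Hd) Hd).
  apply deriv_minimum with 0 1; try lra. intros x H0 H1. apply Hmin; lra.
Qed.

Lemma rolle_lim f f' a b : a < b -> (forall c, a <= c <= b -> derivable_pt_lim f c (f' c)) ->
  f a = f b -> exists c, a < c < b /\ f' c = 0.
Proof.
  intros Hab Hd He. destruct (MVT_cor2 f f' a b Hab Hd) as [c [Hc1 Hc2]].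
  exists c. split; auto. rewrite He, Rminus_diag in Hc1.
  symmetry in Hc1. apply Rmult_integral in Hc1 as [|]; [auto | lra].
Qed.

(* At a zero of [ent_gap''], v (1 - v) takes a fixed nonzero value, and v (1 - v) = c has
   at most two solutions, symmetric about 1/2. *)
Lemma ent_gap''_three_zeros A B C v1 v2 v3 : 0 < v1 < v2 -> v2 < v3 < 1 ->
  ent_gap'' A B C v1 = 0 -> ent_gap'' A B C v2 = 0 -> ent_gap'' A B C v3 = 0 -> False.
Proof.
  intros H12 H23 E1 E2 E3. set (k := 2 * B - 2 * A - 2 * C).
  assert (K : forall v, 0 < v < 1 -> ent_gap'' A B C v = 0 -> k * (v * (1 - v)) = 1).
  { intros v Hv Ev.
    assert (Ev' : ent_gap'' A B C v * (v * (1 - v)) = 0) by (rewrite Ev; ring).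
    unfold ent_gap'' in Ev'. unfold k.
    replace ((- / (1 - v) - / v - 2 * A + 2 * B - 2 * C) * (v * (1 - v)))
      with (- 1 + (2 * B - 2 * A - 2 * C) * (v * (1 - v))) in Ev' by (field; lra).
    lra. }
  pose proof (K v1 ltac:(lra) E1) as K1. pose proof (K v2 ltac:(lra) E2) as K2.
  pose proof (K v3 ltac:(lra) E3) as K3.
  assert (Hk : k <> 0) by (intro Hk; rewrite Hk in K1; lra).
  assert (M12 : k * ((v1 - v2) * (1 - v1 - v2)) = 0) by nra.
  assert (M13 : k * ((v1 - v3) * (1 - v1 - v3)) = 0) by nra.
  apply Rmult_integral in M12 as [|M12]; [contradiction|].
  apply Rmult_integral in M13 as [|M13]; [contradiction|].
  apply Rmult_integral in M12 as [|]; apply Rmult_integral in M13 as [|]; lra.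
Qed.

(* Three zeros of a nonnegative [ent_gap] are interior minima, so Rolle produces four zeros
   of [ent_gap'] and then three of [ent_gap'']. *)
Lemma ent_gap_three_zeros c A B C z1 z2 z3 : 0 < z1 -> z1 < z2 -> z2 < z3 -> z3 < 1 ->
  (forall t, 0 < t < 1 -> 0 <= ent_gap c A B C t) ->
  ent_gap c A B C z1 = 0 -> ent_gap c A B C z2 = 0 -> ent_gap c A B C z3 = 0 -> False.
Proof.
  intros H1 H12 H23 H3 Hpos E1 E2 E3.
  assert (Hmin : forall z, 0 < z < 1 -> ent_gap c A B C z = 0 -> ent_gap' A B C z = 0).
  { intros z Hz Ez. apply (derivative_zero_at_min (ent_gap c A B C) z); auto.
    - intros x Hx. rewrite Ez. apply Hpos; auto.
    - apply derivable_pt_lim_ent_gap; auto. }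
  assert (D : forall a b, 0 < a -> b < 1 -> forall x, a <= x <= b ->
            derivable_pt_lim (ent_gap c A B C) x (ent_gap' A B C x))
    by (intros; apply derivable_pt_lim_ent_gap; lra).
  assert (D' : forall a b, 0 < a -> b < 1 -> forall x, a <= x <= b ->
            derivable_pt_lim (ent_gap' A B C) x (ent_gap'' A B C x))
    by (intros; apply derivable_pt_lim_ent_gap'; lra).
  pose proof (Hmin z1 ltac:(lra) E1) as F1. pose proof (Hmin z2 ltac:(lra) E2) as F2.
  destruct (rolle_lim _ _ z1 z2 H12 (D z1 z2 ltac:(lra) ltac:(lra)) ltac:(lra)) as [u1 [Hu1 U1]].
  destruct (rolle_lim _ _ z2 z3 H23 (D z2 z3 ltac:(lra) ltac:(lra)) ltac:(lra)) as [u2 [Hu2 U2]].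
  destruct (rolle_lim _ _ z1 u1 ltac:(lra) (D' z1 u1 ltac:(lra) ltac:(lra)) ltac:(lra)) as [v1 [Hv1 V1]].
  destruct (rolle_lim _ _ u1 z2 ltac:(lra) (D' u1 z2 ltac:(lra) ltac:(lra)) ltac:(lra)) as [v2 [Hv2 V2]].
  destruct (rolle_lim _ _ z2 u2 ltac:(lra) (D' z2 u2 ltac:(lra) ltac:(lra)) ltac:(lra)) as [v3 [Hv3 V3]].
  apply (ent_gap''_three_zeros A B C v1 v2 v3); auto; lra.
Qed.

Lemma at_most_two_interior_zeros (g : R -> R) :
  (forall z1 z2 z3, 0 < z1 < z2 -> z2 < z3 < 1 -> g z1 = 0 -> g z2 = 0 -> g z3 = 0 -> False) ->
  exists a b, forall x, 0 <= x <= 1 -> g x = 0 -> x = 0 \/ x = 1 \/ x = a \/ x = b.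
Proof.
  intros H3. set (Z := fun x => 0 < x < 1 /\ g x = 0).
  assert (Hend : forall x, 0 <= x <= 1 -> g x = 0 -> x = 0 \/ x = 1 \/ Z x).
  { intros x Hx Hg. destruct (Req_dec x 0); [auto|]. destruct (Req_dec x 1); [auto|].
    right; right. split; [lra | auto]. }
  destruct (classic (exists a b, a < b /\ Z a /\ Z b)) as [[a [b [Hab [Za Zb]]]]|Hno2].
  - exists a, b. intros x Hx Hg. destruct (Hend x Hx Hg) as [|[|[Zx Gx]]]; auto.
    right; right. destruct Za as [Za Ga], Zb as [Zb Gb].
    destruct (Rtotal_order x a) as [Hxa|[|Hxa]]; [exfalso; apply (H3 x a b); auto; lra | auto|].
    destruct (Rtotal_order x b) as [Hxb|[|Hxb]]; [exfalso; apply (H3 a x b); auto; lra | auto|].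
    exfalso; apply (H3 a b x); auto; lra.
  - destruct (classic (exists a, Z a)) as [[a Za]|Hno1].
    + exists a, a. intros x Hx Hg. destruct (Hend x Hx Hg) as [|[|Zx]]; auto.
      right; right; left. destruct (Rtotal_order x a) as [Hxa|[|Hxa]]; auto;
        exfalso; apply Hno2; [exists x, a | exists a, x]; auto.
    + exists 0, 0. intros x Hx Hg. destruct (Hend x Hx Hg) as [|[|Zx]]; auto.
      exfalso; eauto.
Qed.

Definition zero_mean_gap (mu : (R -> Prop) -> R) (g : R -> R) : Prop :=
  unif_cont g /\ (forall x, 0 <= x <= 1 -> 0 <= g x) /\ is_expectation mu g 0 /\
  (forall z1 z2 z3, 0 < z1 < z2 -> z2 < z3 < 1 -> g z1 = 0 -> g z2 = 0 -> g z3 = 0 -> False).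

Lemma quadratic_gap mu p q a b c : prior mu -> is_expectation mu (fun t => t) p ->
  is_expectation mu (fun t => t * t) q -> a + (b * p + c * q) = 0 ->
  (forall t, 0 <= t <= 1 -> 0 <= a + (b * t + c * (t * t))) ->
  (forall t, 0 < t < 1 -> 0 < a + (b * t + c * (t * t))) ->
  zero_mean_gap mu (fun t => a + (b * t + c * (t * t))).
Proof.
  intros Hmu Hp Hq E Hnn Hpos. split; [|split; [auto | split]].
  - apply unif_cont_plus; [apply unif_cont_const|].
    apply unif_cont_plus; apply unif_cont_scal; [apply unif_cont_id | apply unif_cont_sq].
  - rewrite <- E. apply is_expectation_plus; [apply is_expectation_const; auto|].
    apply is_expectation_plus; apply is_expectation_scal; auto.
  - intros z1 z2 z3 H12 H23 G1 _ _. specialize (Hpos z1 ltac:(lra)). lra.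
Qed.

Lemma bayes_risk_ent_gap p q c t : 0 < t < 1 ->
  c + -1 * bayes_risk p q t =
  ent_gap c (ln (1 / bayes_d1 p q)) (ln (1 / (1 - bayes_d1 p q)) + ln (1 / bayes_d0 p q))
    (ln (1 / (1 - bayes_d0 p q))) t.
Proof.
  intro Ht. unfold bayes_risk, log_risk, log_loss, ent_gap, S.
  rewrite !xlogx_eq by lra. ring.
Qed.

Lemma bayes_gap mu p q s : latent_information_prior mu ->
  is_expectation mu (fun t => t) p -> is_expectation mu (fun t => t * t) q ->
  is_expectation mu S s -> positive_cells p q ->
  zero_mean_gap mu (fun t => (cond_entropy p q - s) + -1 * bayes_risk p q t).
Proof.
  intros Hl Hp Hq Hs Hc. pose proof Hl as [Hmu _].
  split; [|split; [|split]].
  - apply unif_cont_plus; [apply unif_cont_const | apply unif_cont_scal, unif_cont_log_risk].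
  - intros x Hx. pose proof (bayes_risk_le mu p q s Hl Hp Hq Hs Hc x Hx). lra.
  - replace 0 with ((cond_entropy p q - s) + -1 * (cond_entropy p q - s)) by ring.
    apply is_expectation_plus; [apply is_expectation_const; auto|].
    apply is_expectation_scal, is_expectation_bayes_risk; auto.
  - intros z1 z2 z3 H12 H23. rewrite !bayes_risk_ent_gap by lra.
    apply ent_gap_three_zeros; try lra.
    intros t Ht. rewrite <- bayes_risk_ent_gap by auto.
    pose proof (bayes_risk_le mu p q s Hl Hp Hq Hs Hc t ltac:(lra)). lra.
Qed.

(* If a cell probability vanishes, the prior is carried by the zeros of a quadratic. *)
Lemma latent_prior_gap mu : latent_information_prior mu -> exists g, zero_mean_gap mu g.
Proof.
  intros Hl. pose proof Hl as [Hmu _].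
  destruct (is_expectation_exists mu (fun t => t) Hmu unif_cont_id) as [p Hp].
  destruct (is_expectation_exists mu (fun t => t * t) Hmu unif_cont_sq) as [q Hq].
  destruct (is_expectation_exists mu S Hmu unif_cont_S) as [s Hs].
  destruct (moments_nonneg mu p q Hmu Hp Hq) as [Hq0 [Hpq Hr]].
  destruct (Req_dec q 0) as [E|Nq].
  { exists (fun t => 0 + (0 * t + 1 * (t * t))).
    apply (quadratic_gap mu p q); auto; intros; nra. }
  destruct (Req_dec (p - q) 0) as [E|Npq].
  { exists (fun t => 0 + (1 * t + -1 * (t * t))).
    apply (quadratic_gap mu p q); auto; intros; nra. }
  destruct (Req_dec (1 - 2 * p + q) 0) as [E|Nr].
  { exists (fun t => 1 + (-2 * t + 1 * (t * t))).
    apply (quadratic_gap mu p q); auto; intros; nra. }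
  eexists. apply (bayes_gap mu p q s); auto. repeat split; lra.
Qed.

Theorem lemma2 (mu : (R -> Prop) -> R) :
  latent_information_prior mu ->
  exists t1 t2 t3 t4 : R,
    mu (fun x => x = t1 \/ x = t2 \/ x = t3 \/ x = t4) = 1.
Proof.
  intros Hl. destruct (latent_prior_gap mu Hl) as [g [Hu [Hg [He H3]]]].
  destruct (at_most_two_interior_zeros g H3) as [a [b Hz]].
  exists 0, 1, a, b. apply (prior_concentrated_on_zeros mu g); auto.
  - exact (proj1 Hl).
  - repeat apply borel_union; apply borel_singleton.
Qed.
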